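(* Let $X\sim p$ be a continuous random variable with a piecewise continuous density $p$ such that $H([X]_1)<\infty$, $\int_{\mathbb R}p(x)|\log p(x)|\,dx<\infty$ and $\operatorname{ess\,sup}_x p(x)=L<\infty$. Then for every real sequence $(c_m)_{m\ge1}$, $$\lim_{m\to\infty}\big(H([X+c_m]_m)-\log m\big)=h(X).$$
   Context: For $m>0$, $[x]_m=\frac1m\lfloor\frac12+mx\rfloor$; $H$ is discrete entropy and $h$ differential entropy (natural log). *)

From Stdlib Require Import Reals Lra ZArith List ClassicalEpsilon.
Open Scope R_scope.

Definition is_RInt (f : R -> R) (a b : R) (v : R) : Prop :=
  exists pr : Riemann_integrable f a b, RiemannInt pr = v.

(* total version (meaningful only when f is Riemann integrable on [a,b]) *)
Definition RInt (f : R -> R) (a b : R) : R :=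
  epsilon (inhabits 0) (fun v => is_RInt f a b v).

Definition locally_integrable (f : R -> R) : Prop :=
  forall a b, a <= b -> exists v, is_RInt f a b v.

(* improper integral over R (via symmetric truncations; used only for
   nonnegative / absolutely integrable integrands) *)
Definition integral_R_is (f : R -> R) (v : R) : Prop :=
  locally_integrable f /\ Un_cv (fun n => RInt f (- INR n) (INR n)) v.

Definition integrable_R (f : R -> R) : Prop := exists v, integral_R_is f v.

Definition piecewise_continuous (p : R -> R) : Prop :=
  (forall a b, a < b -> exists D : list R,
      forall x, a < x < b -> ~ In x D -> continuity_pt p x) /\
  (forall x, (exists l, limit1_in p (fun y => x < y) l x) /\
             (exists l, limit1_in p (fun y => y < x) l x)).

Definition is_density (p : R -> R) : Prop :=
  (forall x, 0 <= p x) /\ integral_R_is p 1.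

(* ess sup p < oo : for piecewise continuous p this amounts to a bound at
   all continuity points *)
Definition ess_bounded (p : R -> R) : Prop :=
  exists L : R, forall x, continuity_pt p x -> p x <= L.

(* [x]_m = (1/m) floor(1/2 + m x).  [X + c]_m = k/m  iff
   (k - 1/2)/m - c <= X < (k + 1/2)/m - c. *)
Definition quant (m x : R) : R := IZR (Int_part (/2 + m * x)) / m.

Definition bin_prob (p : R -> R) (m c : R) (k : Z) : R :=
  RInt p ((IZR k - /2) / m - c) ((IZR k + /2) / m - c).

(* discrete entropy (natural log, 0 log 0 = 0 since ln 0 = 0 in Stdlib)
   of a distribution P on Z: the (nonnegative-term) series over Z *)
Definition ent_term (P : Z -> R) (k : Z) : R := - (P k * ln (P k)).

Definition disc_entropy_is (P : Z -> R) (v : R) : Prop :=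
  infinite_sum (fun n => ent_term P (Z.of_nat n) + ent_term P (- Z.of_nat n - 1)%Z) v.

Definition H_quant_is (p : R -> R) (m c : R) (v : R) : Prop :=
  disc_entropy_is (bin_prob p m c) v.

Definition diff_entropy_is (p : R -> R) (v : R) : Prop :=
  integral_R_is (fun x => p x * ln (p x)) (- v).

From Stdlib Require Import Reals Lra Lia ZArith List ClassicalEpsilon FunctionalExtensionality Classical RList.
Open Scope R_scope.

(* Write [H([X + c]_m) - ln m] as the sum over the bins of width [1/m] of [- P ln (m P)], [P] the
   mass of the bin. By Jensen's inequality for [x ln x] each term is at least [- \int p ln p] over
   its bin, which gives the lower bound [h(X)] up to the tails of the integral. For the upper bound
   split the line at [+-N]. On [[-N, N]], [p] is bounded and uniformly continuous away from
   finitely many discontinuities, so the Jensen defects of the bins add up to [o(1)] as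
   [m -> oo]. In the tails, the log-sum inequality bounds the [m] bins inside two consecutive
   unit bins by the entropy contributions of these unit bins to [H([X]_1)], and these are
   small once [N] is large because [H([X]_1) < oo]. *)

Definition Rintegrable (f : R -> R) (a b : R) : Prop := inhabited (Riemann_integrable f a b).

Lemma RInt_RiemannInt f a b (pr : Riemann_integrable f a b) : RInt f a b = RiemannInt pr.
Proof.
  unfold RInt.
  assert (H : exists v, is_RInt f a b v) by (exists (RiemannInt pr); exists pr; reflexivity).
  destruct (epsilon_spec (inhabits 0) (fun v => is_RInt f a b v) H) as [pr' E].
  rewrite <- E. apply RiemannInt_P5.
Qed.

Lemma Rintegrable_ext f g a b :
  (forall x, Rmin a b <= x <= Rmax a b -> f x = g x) -> Rintegrable f a b -> Rintegrable g a b.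
Proof. intros E [pr]. constructor. exact (@Riemann_integrable_ext f g a b E pr). Qed.

Lemma Rintegrable_lin f g a b l :
  Rintegrable f a b -> Rintegrable g a b -> Rintegrable (fun x => f x + l * g x) a b.
Proof. intros [p1] [p2]; constructor; apply RiemannInt_P10; auto. Qed.

Lemma Rintegrable_const a b k : Rintegrable (fun _ => k) a b.
Proof. constructor. exact (RiemannInt_P14 a b k). Qed.

Lemma Rintegrable_abs f a b : Rintegrable f a b -> Rintegrable (fun x => Rabs (f x)) a b.
Proof. intros [p]; constructor; apply RiemannInt_P16; auto. Qed.

Lemma RInt_point f a : RInt f a a = 0.
Proof. rewrite (RInt_RiemannInt _ _ _ (RiemannInt_P7 f a)). apply RiemannInt_P9. Qed.

Lemma RInt_chasles f a b c :
  Rintegrable f a b -> Rintegrable f b c -> RInt f a b + RInt f b c = RInt f a c.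
Proof.
  intros [p1] [p2].
  rewrite (RInt_RiemannInt _ _ _ p1), (RInt_RiemannInt _ _ _ p2),
    (RInt_RiemannInt _ _ _ (RiemannInt_P24 p1 p2)).
  apply RiemannInt_P26.
Qed.

Lemma RInt_lin f g a b l : Rintegrable f a b -> Rintegrable g a b ->
  RInt (fun x => f x + l * g x) a b = RInt f a b + l * RInt g a b.
Proof.
  intros [p1] [p2].
  rewrite (RInt_RiemannInt _ _ _ p1), (RInt_RiemannInt _ _ _ p2),
    (RInt_RiemannInt _ _ _ (RiemannInt_P10 l p1 p2)).
  apply RiemannInt_P13.
Qed.

Lemma RInt_const a b k : RInt (fun _ => k) a b = k * (b - a).
Proof.
  change (fun _ : R => k) with (fct_cte k).
  rewrite (RInt_RiemannInt _ _ _ (RiemannInt_P14 a b k)). apply RiemannInt_P15.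
Qed.

Lemma RInt_le f g a b : a <= b -> Rintegrable f a b -> Rintegrable g a b ->
  (forall x, a <= x <= b -> f x <= g x) -> RInt f a b <= RInt g a b.
Proof.
  intros ab [p1] [p2] H. rewrite (RInt_RiemannInt _ _ _ p1), (RInt_RiemannInt _ _ _ p2).
  apply RiemannInt_P19; auto. intros; apply H; lra.
Qed.

Lemma RInt_abs_le f a b :
  a <= b -> Rintegrable f a b -> Rabs (RInt f a b) <= RInt (fun x => Rabs (f x)) a b.
Proof.
  intros ab [p1].
  rewrite (RInt_RiemannInt _ _ _ p1), (RInt_RiemannInt _ _ _ (RiemannInt_P16 p1)).
  apply RiemannInt_P17; auto.
Qed.

Lemma RInt_ge0 f a b :
  a <= b -> Rintegrable f a b -> (forall x, a <= x <= b -> 0 <= f x) -> 0 <= RInt f a b.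
Proof.
  intros ab I H. replace 0 with (RInt (fun _ => 0) a b) by (rewrite RInt_const; ring).
  apply RInt_le; auto. apply Rintegrable_const.
Qed.

Lemma pos_Rl_map (g : R -> R) (l : list R) i :
  (i < length l)%nat -> pos_Rl (map g l) i = g (pos_Rl l i).
Proof.
  revert i; induction l as [|x l IH]; intros i Hi; simpl in *. lia.
  destruct i; auto. apply IH. lia.
Qed.

Lemma IsStepFun_comp (g : R -> R) a b (s : StepFun a b) : IsStepFun (fun x => g (s x)) a b.
Proof.
  destruct (pre s) as [l [lf [H1 [H2 [H3 [H4 H5]]]]]].
  exists l, (map g lf). split; [|split; [|split; [|split]]]; auto.
  - rewrite length_map. auto.
  - intros i Hi x Hx. simpl. rewrite (H5 i Hi x Hx), pos_Rl_map; auto.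
    rewrite H4 in Hi. simpl in Hi. auto.
Qed.

Lemma bounded_unif_cont_le g M eps del :
  (forall u, Rabs (g u) <= M) -> 0 < del ->
  (forall u v, Rabs (u - v) < del -> Rabs (g u - g v) <= eps) ->
  forall u v, Rabs (g u - g v) <= eps + 2 * M / del * Rabs (u - v).
Proof.
  intros HM hdel Hu u v.
  assert (eps0 : 0 <= eps).
  { eapply Rle_trans; [apply Rabs_pos|]. apply (Hu u u). rewrite Rminus_diag, Rabs_R0. lra. }
  assert (M0 : 0 <= M) by (eapply Rle_trans; [apply Rabs_pos|apply (HM 0)]).
  assert (K0 : 0 <= 2 * M / del) by (unfold Rdiv; apply Rmult_le_pos; [lra|left; apply Rinv_0_lt_compat; lra]).
  destruct (Rlt_or_le (Rabs (u - v)) del) as [Hl|Hl].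
  - pose proof (Hu u v Hl). pose proof (Rabs_pos (u - v)). nra.
  - assert (Rabs (g u - g v) <= 2 * M).
    { unfold Rminus. eapply Rle_trans; [apply Rabs_triang|]. rewrite Rabs_Ropp.
      pose proof (HM u); pose proof (HM v); lra. }
    assert (2 * M <= 2 * M / del * Rabs (u - v)).
    { apply Rle_trans with (2 * M / del * del). right; field; lra.
      apply Rmult_le_compat_l; auto. }
    lra.
Qed.

Lemma Rintegrable_comp_unif f g a b M : a <= b ->
  (forall u, Rabs (g u) <= M) ->
  (forall eps, 0 < eps -> exists del, 0 < del /\
     forall u v, Rabs (u - v) < del -> Rabs (g u - g v) <= eps) ->
  Rintegrable f a b -> Rintegrable (fun x => g (f x)) a b.
Proof.
  intros ab HM Hu [pr]. constructor. intro eps.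
  set (w := b - a + 1).
  assert (e1pos : 0 < eps / (2 * w)) by (unfold w; apply Rdiv_lt_0_compat; [apply cond_pos|lra]).
  destruct (constructive_indefinite_description _ (Hu _ e1pos)) as [del [delpos Hdel]].
  pose proof (bounded_unif_cont_le g M _ del HM delpos Hdel) as Hlip.
  set (K := 2 * M / del).
  assert (K0 : 0 <= K).
  { unfold K. assert (0 <= M) by (eapply Rle_trans; [apply Rabs_pos|apply (HM 0)]).
    unfold Rdiv; apply Rmult_le_pos; [lra|left; apply Rinv_0_lt_compat; auto]. }
  assert (e2pos : 0 < eps / (2 * (K + 1))) by (apply Rdiv_lt_0_compat; [apply cond_pos|lra]).
  destruct (pr (mkposreal _ e2pos)) as [s [err [Hs Herr]]].
  exists (mkStepFun (IsStepFun_comp g a b s)).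
  exists (mkStepFun (StepFun_P28 K (mkStepFun (StepFun_P4 a b (eps / (2 * w)))) err)).
  split.
  - intros t Ht. simpl. unfold fct_cte. specialize (Hs t Ht).
    pose proof (Hlip (f t) (s t)). fold K in H.
    pose proof (Rmult_le_compat_l K _ _ K0 Hs). lra.
  - rewrite StepFun_P30, StepFun_P18. simpl in Herr.
    eapply Rle_lt_trans; [apply Rabs_triang|].
    rewrite Rabs_mult, Rabs_mult, (Rabs_right (eps / (2*w))), (Rabs_right (b - a)), (Rabs_right K)
      by (unfold w in *; lra).
    assert (eps / (2 * w) * (b - a) < eps / 2).
    { apply Rlt_le_trans with (eps / (2 * w) * w). apply Rmult_lt_compat_l; unfold w in *; lra.
      right; field; unfold w; lra. }
    assert (K * Rabs (RiemannInt_SF err) <= K * (eps / (2 * (K + 1)))) by (apply Rmult_le_compat_l; lra).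
    assert (K * (eps / (2 * (K + 1))) < eps / 2).
    { pose proof (cond_pos eps).
      apply Rlt_le_trans with (eps / (2 * (K + 1)) * (K + 1)). nra. right; field; lra. }
    lra.
Qed.

(** * The function [x ln x] *)

(* Since [ln 0 = 0] in Stdlib, [xlnx] vanishes on [(-oo, 0]], the usual convention [0 ln 0 = 0]. *)
Definition xlnx (t : R) : R := t * ln t.

Lemma ln_le_sub1 x : 0 < x -> ln x <= x - 1.
Proof. intros H. pose proof (exp_ineq1_le (ln x)). rewrite exp_ln in H0; lra. Qed.

Lemma ln_nonpos x : x <= 1 -> ln x <= 0.
Proof.
  intros H. destruct (Rlt_or_le 0 x) as [h|h].
  - pose proof (ln_le_sub1 x h). lra.
  - unfold ln. destruct (Rlt_dec 0 x); [exfalso; lra|lra].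
Qed.

Lemma ln_nonneg x : 1 <= x -> 0 <= ln x.
Proof.
  intros H. destruct (Req_dec x 1) as [->|n]. rewrite ln_1; lra.
  left. rewrite <- ln_1. apply ln_increasing; lra.
Qed.

Lemma ln_le_mono x y : 0 < x -> x <= y -> ln x <= ln y.
Proof. intros h1 h2. destruct (Req_dec x y) as [->|n]. lra. left; apply ln_increasing; lra. Qed.

Lemma ln_le_m1 t : 0 < t <= /4 -> ln t <= -1.
Proof.
  intros [h1 h2]. pose proof ln_lt_2.
  assert (ln t <= ln (/4)) by (apply ln_le_mono; lra).
  rewrite ln_Rinv in H0 by lra. replace 4 with (2 * 2) in H0 by ring.
  rewrite ln_mult in H0 by lra. lra.
Qed.

Lemma xlnx_nonpos_arg t : t <= 0 -> xlnx t = 0.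
Proof. intros h. unfold xlnx, ln. destruct (Rlt_dec 0 t); [exfalso; lra|ring]. Qed.

Lemma xlnx_tangent t a : 0 <= t -> 0 < a -> xlnx a + (1 + ln a) * (t - a) <= xlnx t.
Proof.
  intros ht ha. destruct (Req_dec t 0) as [->|tn].
  - rewrite (xlnx_nonpos_arg 0) by lra. unfold xlnx. lra.
  - unfold xlnx. pose proof (ln_le_sub1 (a / t)) as L.
    assert (0 < a / t) by (apply Rdiv_lt_0_compat; lra).
    specialize (L H). unfold Rdiv in L.
    rewrite ln_mult, ln_Rinv in L by (try apply Rinv_0_lt_compat; lra).
    apply (Rmult_le_compat_l t) in L; [|lra].
    replace (t * (a * / t - 1)) with (a - t) in L by (field; lra).
    nra.
Qed.

Lemma xlnx_ge_m1 t : 0 <= t -> -1 <= xlnx t.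
Proof. intros ht. pose proof (xlnx_tangent t 1 ht Rlt_0_1). unfold xlnx in *. rewrite ln_1 in H. lra. Qed.

Lemma xlnx_nonpos t : 0 <= t <= 1 -> xlnx t <= 0.
Proof. intros [h1 h2]. unfold xlnx. pose proof (ln_nonpos t h2). nra. Qed.

Lemma Rabs_xlnx_le t B : 1 <= B -> 0 <= t <= B -> Rabs (xlnx t) <= 1 + B * ln B.
Proof.
  intros HB [h1 h2]. pose proof (xlnx_ge_m1 t h1). pose proof (ln_nonneg B HB).
  assert (xlnx t <= B * ln B).
  { destruct (Rle_or_lt t 1) as [h|h].
    - pose proof (xlnx_nonpos t (conj h1 h)). nra.
    - unfold xlnx. pose proof (ln_le_mono t B ltac:(lra) h2). pose proof (ln_nonneg t ltac:(lra)). nra. }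
  apply Rabs_le; nra.
Qed.

Lemma xlnx_superadditive a b : 0 <= a -> 0 <= b -> xlnx a + xlnx b <= xlnx (a + b).
Proof.
  intros ha hb.
  destruct (Req_dec a 0) as [->|na]. rewrite Rplus_0_l, (xlnx_nonpos_arg 0); lra.
  destruct (Req_dec b 0) as [->|nb]. rewrite Rplus_0_r, (xlnx_nonpos_arg 0); lra.
  unfold xlnx.
  assert (ln a <= ln (a + b)) by (apply ln_le_mono; lra).
  assert (ln b <= ln (a + b)) by (apply ln_le_mono; lra).
  nra.
Qed.

Lemma xlnx_antimono_quarter s t : 0 <= s <= t -> t <= /4 -> xlnx t <= xlnx s.
Proof.
  intros [h1 h2] h3. destruct (Req_dec t 0) as [->|tn].
  - replace s with 0 by lra. lra.
  - pose proof (xlnx_tangent s t h1 ltac:(lra)). pose proof (ln_le_m1 t ltac:(lra)). nra.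
Qed.

Lemma Rabs_xlnx_le_sqrt t : 0 < t < 1 -> Rabs (xlnx t) <= 2 * sqrt t.
Proof.
  intros [h1 h2].
  assert (st : 0 < sqrt t) by (apply sqrt_lt_R0; lra).
  assert (E : ln t = 2 * ln (sqrt t)).
  { rewrite <- (sqrt_sqrt t) at 1 by lra. rewrite ln_mult by lra. ring. }
  pose proof (ln_le_sub1 (/ sqrt t) ltac:(apply Rinv_0_lt_compat; lra)).
  rewrite ln_Rinv in H by lra.
  assert (ln t <= 0) by (apply ln_nonpos; lra).
  unfold xlnx. rewrite Rabs_left1 by nra.
  assert (- ln t <= 2 / sqrt t) by (unfold Rdiv; lra).
  apply Rle_trans with (t * (2 / sqrt t)). nra.
  right. rewrite <- (sqrt_sqrt t) at 1 by lra. field. lra.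
Qed.

Lemma xlnx_cont x : 0 <= x -> continuity_pt xlnx x.
Proof.
  intros hx. destruct (Req_dec x 0) as [->|nx].
  - intros eps heps. exists (Rmin 1 (eps / 2 * (eps / 2))). split.
    + apply Rmin_pos; [lra|]. nra.
    + intros y [_ hy]. simpl in *. unfold R_dist in *. rewrite Rminus_0_r in hy.
      rewrite (xlnx_nonpos_arg 0) by lra. rewrite Rminus_0_r.
      destruct (Rle_or_lt y 0) as [h|h].
      * rewrite xlnx_nonpos_arg, Rabs_R0 by auto. auto.
      * rewrite Rabs_right in hy by lra.
        assert (y < 1) by (apply Rlt_le_trans with (1 := hy); apply Rmin_l).
        assert (y < eps / 2 * (eps / 2)) by (apply Rlt_le_trans with (1 := hy); apply Rmin_r).
        apply Rle_lt_trans with (1 := Rabs_xlnx_le_sqrt y ltac:(lra)).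
        assert (sqrt y < eps / 2).
        { rewrite <- (sqrt_square (eps/2)) by lra. apply sqrt_lt_1; lra. }
        lra.
  - unfold xlnx. change (fun t => t * ln t) with (id * ln)%F.
    apply continuity_pt_mult. apply derivable_continuous_pt, derivable_pt_id.
    apply derivable_continuous_pt. exists (/ x). apply derivable_pt_lim_ln; lra.
Qed.

(* Clamping to [[0, B]] turns [xlnx] into a bounded, uniformly continuous function on all of [R]. *)
Definition clamp (B u : R) : R := Rmin B (Rmax 0 u).

Lemma clamp_range B u : 0 <= B -> 0 <= clamp B u <= B.
Proof. intros. unfold clamp. split. apply Rmin_glb; auto. apply Rmax_l. apply Rmin_l. Qed.

Lemma clamp_id B u : 0 <= u <= B -> clamp B u = u.
Proof. intros. unfold clamp. rewrite Rmax_right by lra. apply Rmin_right; lra. Qed.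

Lemma clamp_mono B u v : u <= v -> clamp B u <= clamp B v.
Proof. intros h. unfold clamp. apply Rle_min_compat_l, Rle_max_compat_l. auto. Qed.

Lemma clamp_lip B u v : 0 <= B -> Rabs (clamp B u - clamp B v) <= Rabs (u - v).
Proof.
  intros hB. unfold clamp, Rmin, Rmax.
  repeat match goal with |- context [Rle_dec ?a ?b] => destruct (Rle_dec a b)
                       | H : context [Rle_dec ?a ?b] |- _ => destruct (Rle_dec a b) end;
  unfold Rabs; repeat match goal with |- context [Rcase_abs ?a] => destruct (Rcase_abs a) end; lra.
Qed.

Lemma xlnx_clamp_unif_cont B : 1 <= B -> forall eps, 0 < eps -> exists del, 0 < del /\
  forall u v, Rabs (u - v) < del -> Rabs (xlnx (clamp B u) - xlnx (clamp B v)) <= eps.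
Proof.
  intros hB eps he.
  destruct (@Heine_cor2 xlnx 0 B (fun x hx => xlnx_cont x (proj1 hx)) (mkposreal eps he)) as [del Hd].
  exists del. split. apply cond_pos. intros u v huv.
  left. apply Hd; try (apply clamp_range; lra).
  apply Rle_lt_trans with (2 := huv). apply clamp_lip; lra.
Qed.

Lemma Rintegrable_xlnx_comp f a b B : a <= b -> 1 <= B ->
  (forall x, a <= x <= b -> 0 <= f x <= B) -> Rintegrable f a b ->
  Rintegrable (fun x => xlnx (f x)) a b.
Proof.
  intros ab hB hf I.
  apply Rintegrable_ext with (fun x => xlnx (clamp B (f x))).
  - intros x Hx. rewrite Rmin_left, Rmax_right in Hx by lra. rewrite clamp_id; auto.
  - apply (Rintegrable_comp_unif f (fun u => xlnx (clamp B u)) a b (1 + B * ln B) ab); auto.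
    + intro u. apply Rabs_xlnx_le; auto. apply clamp_range; lra.
    + apply xlnx_clamp_unif_cont; auto.
Qed.

Lemma Rabs_le_inv x a : Rabs x <= a -> - a <= x <= a.
Proof. unfold Rabs; destruct (Rcase_abs x); intros; lra. Qed.

Lemma Rdiv_nonneg a b : 0 <= a -> 0 < b -> 0 <= a / b.
Proof. intros. unfold Rdiv. apply Rmult_le_pos; auto. left; apply Rinv_0_lt_compat; auto. Qed.

Lemma Un_cv_le_eventually (u : nat -> R) l b N :
  Un_cv u l -> (forall n, (N <= n)%nat -> u n <= b) -> l <= b.
Proof.
  intros Hu Hb. destruct (Rle_or_lt l b) as [h|h]; auto.
  destruct (Hu (l - b) ltac:(lra)) as [N' HN'].
  specialize (HN' (max N N') ltac:(lia)). specialize (Hb (max N N') ltac:(lia)).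
  unfold Rdist in HN'. apply Rabs_def2 in HN'. lra.
Qed.

Lemma Un_cv_ge_eventually (u : nat -> R) l b N :
  Un_cv u l -> (forall n, (N <= n)%nat -> b <= u n) -> b <= l.
Proof.
  intros Hu Hb. destruct (Rle_or_lt b l) as [h|h]; auto.
  destruct (Hu (b - l) ltac:(lra)) as [N' HN'].
  specialize (HN' (max N N') ltac:(lia)). specialize (Hb (max N N') ltac:(lia)).
  unfold Rdist in HN'. apply Rabs_def2 in HN'. lra.
Qed.

Definition loc_int (f : R -> R) : Prop := forall a b, a <= b -> Rintegrable f a b.

Lemma loc_int_locally_integrable f : loc_int f <-> locally_integrable f.
Proof.
  split; intros H a b hab.
  - destruct (H a b hab) as [pr]. exists (RiemannInt pr), pr. reflexivity.
  - destruct (H a b hab) as [v [pr _]]. constructor; exact pr.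
Qed.

Lemma RInt_split3 f a u v b : loc_int f -> a <= u -> u <= v -> v <= b ->
  RInt f a b = RInt f a u + RInt f u v + RInt f v b.
Proof.
  intros I h1 h2 h3.
  rewrite (RInt_chasles f a u v), RInt_chasles by (apply I; lra). reflexivity.
Qed.

Lemma RInt_le_sub_interval f u v a b : (forall x, 0 <= f x) -> loc_int f ->
  a <= u -> u <= v -> v <= b -> RInt f u v <= RInt f a b.
Proof.
  intros h1 h2 H1 H2 H3. rewrite (RInt_split3 f a u v b) by auto.
  assert (0 <= RInt f a u) by (apply RInt_ge0; auto).
  assert (0 <= RInt f v b) by (apply RInt_ge0; auto). lra.
Qed.

Definition sym_int (f : R -> R) (n : nat) := RInt f (- INR n) (INR n).

Section NonnegImproper.
Variables (f : R -> R) (V : R).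
Hypotheses (f_ge0 : forall x, 0 <= f x) (f_loc : loc_int f) (f_cv : Un_cv (sym_int f) V).

Lemma sym_int_mono n n' : (n <= n')%nat -> sym_int f n <= sym_int f n'.
Proof.
  intros h. apply le_INR in h. pose proof (pos_INR n).
  apply RInt_le_sub_interval; auto; lra.
Qed.

Lemma RInt_le_lim u v : u <= v -> RInt f u v <= V.
Proof.
  intros h. destruct (INR_unbounded (Rmax (Rabs u) (Rabs v))) as [n Hn].
  pose proof (Rmax_l (Rabs u) (Rabs v)). pose proof (Rmax_r (Rabs u) (Rabs v)).
  pose proof (Rle_abs u). pose proof (Rle_abs (- u)). pose proof (Rle_abs v). pose proof (Rle_abs (- v)).
  rewrite Rabs_Ropp in *.
  apply Rle_trans with (sym_int f n).
  - apply RInt_le_sub_interval; auto; lra.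
  - apply growing_ineq; auto. intro k. apply sym_int_mono; auto.
Qed.

Lemma RInt_tail_le (N : nat) u v : u <= v -> (INR N <= u \/ v <= - INR N) ->
  RInt f u v <= V - sym_int f N.
Proof.
  intros huv H. pose proof (pos_INR N). unfold sym_int.
  destruct H as [H|H].
  - pose proof (RInt_le_lim (- INR N) v ltac:(lra)).
    rewrite (RInt_split3 f (- INR N) (INR N) u v) in H1 by (auto; lra).
    assert (0 <= RInt f (INR N) u) by (apply RInt_ge0; auto; lra). lra.
  - pose proof (RInt_le_lim u (INR N) ltac:(lra)).
    rewrite (RInt_split3 f u v (- INR N) (INR N)) in H1 by (auto; lra).
    assert (0 <= RInt f v (- INR N)) by (apply RInt_ge0; auto; lra). lra.
Qed.

End NonnegImproper.

Section AbsImproper.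
Variables (f : R -> R) (Va : R).
Hypotheses (f_loc : loc_int f) (f_abs_cv : Un_cv (sym_int (fun x => Rabs (f x))) Va).

Let g := fun x => Rabs (f x).

Lemma sym_int_near_RInt (N n : nat) u v : u <= - INR N -> INR N <= v -> - INR n <= u -> v <= INR n ->
  Rabs (sym_int f n - RInt f u v) <= Va - sym_int g N.
Proof.
  intros h1 h2 h3 h4. pose proof (pos_INR N).
  assert (g_loc : loc_int g) by (intros a b h; apply Rintegrable_abs; auto).
  assert (g_ge0 : forall x, 0 <= g x) by (intro; apply Rabs_pos).
  unfold sym_int. rewrite (RInt_split3 f (- INR n) u v (INR n)) by (auto; lra).
  replace (RInt f (- INR n) u + RInt f u v + RInt f v (INR n) - RInt f u v) with
    (RInt f (- INR n) u + RInt f v (INR n)) by ring.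
  eapply Rle_trans; [apply Rabs_triang|].
  assert (Rabs (RInt f (- INR n) u) <= RInt g (- INR n) u) by (apply RInt_abs_le; [lra|apply f_loc; lra]).
  assert (Rabs (RInt f v (INR n)) <= RInt g v (INR n)) by (apply RInt_abs_le; [lra|apply f_loc; lra]).
  pose proof (RInt_split3 g (- INR n) u v (INR n) g_loc h3 ltac:(lra) h4).
  pose proof (RInt_split3 g u (- INR N) (INR N) v g_loc h1 ltac:(lra) h2).
  pose proof (RInt_le_lim g Va g_ge0 g_loc f_abs_cv (- INR n) (INR n) ltac:(lra)).
  assert (0 <= RInt g u (- INR N)) by (apply RInt_ge0; auto; apply g_loc; lra).
  assert (0 <= RInt g (INR N) v) by (apply RInt_ge0; auto; apply g_loc; lra).
  unfold sym_int. lra.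
Qed.

Lemma abs_improper_integral : exists I, Un_cv (sym_int f) I /\
  forall (N : nat) u v, u <= - INR N -> INR N <= v -> Rabs (RInt f u v - I) <= Va - sym_int g N.
Proof.
  assert (Cau : Cauchy_crit (sym_int f)).
  { intros eps he. destruct (f_abs_cv eps he) as [N HN].
    exists N. intros n m hn hm. unfold Rdist.
    assert (forall a b, (N <= a)%nat -> (a <= b)%nat -> Rabs (sym_int f b - sym_int f a) < eps).
    { intros a b ha hb. apply Rle_lt_trans with (Va - sym_int g N).
      - apply le_INR in ha. apply le_INR in hb. apply sym_int_near_RInt; lra.
      - specialize (HN N (le_n N)). unfold Rdist in HN. apply Rabs_def2 in HN. unfold g. lra. }
    destruct (Nat.le_ge_cases n m).
    + rewrite Rabs_minus_sym. apply H; lia.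
    + apply H; lia. }
  destruct (R_complete _ Cau) as [I HI]. exists I. split; auto.
  intros N u v h1 h2.
  destruct (INR_unbounded (Rmax (Rabs u) (Rabs v))) as [n0 Hn0].
  assert (Hle : forall n, (n0 <= n)%nat -> Rabs (sym_int f n - RInt f u v) <= Va - sym_int g N).
  { intros n hn. apply le_INR in hn.
    pose proof (Rmax_l (Rabs u) (Rabs v)). pose proof (Rmax_r (Rabs u) (Rabs v)).
    pose proof (Rle_abs (- u)). pose proof (Rle_abs v). rewrite Rabs_Ropp in *.
    apply sym_int_near_RInt; auto; lra. }
  assert (Hcv : Un_cv (fun n => sym_int f n - RInt f u v) (I - RInt f u v)).
  { intros eps he. destruct (HI eps he) as [N1 HN1]. exists N1. intros n hn.
    unfold Rdist. replace (sym_int f n - RInt f u v - (I - RInt f u v)) with (sym_int f n - I) by ring.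
    apply HN1; auto. }
  rewrite Rabs_minus_sym. apply Rabs_le. split.
  - apply (Un_cv_ge_eventually _ _ _ n0 Hcv). intros n hn. pose proof (Rabs_le_inv _ _ (Hle n hn)). lra.
  - apply (Un_cv_le_eventually _ _ _ n0 Hcv). intros n hn. pose proof (Rabs_le_inv _ _ (Hle n hn)). lra.
Qed.

End AbsImproper.

Fixpoint zsum (T : Z -> R) (A : Z) (n : nat) : R :=
  match n with O => 0 | S n => zsum T A n + T (A + Z.of_nat n)%Z end.

Lemma zsum_succ T A n : zsum T A (S n) = zsum T A n + T (A + Z.of_nat n)%Z.
Proof. reflexivity. Qed.

Lemma zsum_add T A n1 n2 : zsum T A (n1 + n2) = zsum T A n1 + zsum T (A + Z.of_nat n1)%Z n2.
Proof.
  induction n2 as [|n2 IH]. simpl. rewrite Nat.add_0_r. ring.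
  rewrite Nat.add_succ_r. simpl. rewrite IH.
  replace (A + Z.of_nat (n1 + n2))%Z with (A + Z.of_nat n1 + Z.of_nat n2)%Z by lia. ring.
Qed.

Lemma zsum_cons T A n : zsum T A (S n) = T A + zsum T (A + 1)%Z n.
Proof. replace (S n) with (1 + n)%nat by lia. rewrite zsum_add. simpl. rewrite Z.add_0_r. ring. Qed.

Lemma zsum_le T U A n : (forall i, (i < n)%nat -> T (A + Z.of_nat i)%Z <= U (A + Z.of_nat i)%Z) ->
  zsum T A n <= zsum U A n.
Proof.
  induction n as [|n IH]; intros H; simpl. lra.
  apply Rplus_le_compat. apply IH; intros; apply H; lia. apply H; lia.
Qed.

Lemma zsum_nonneg T A n : (forall k, 0 <= T k) -> 0 <= zsum T A n.
Proof. induction n; simpl; intros H. lra. specialize (IHn H). specialize (H (A + Z.of_nat n)%Z). lra. Qed.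

Lemma zsum_plus T U A n : zsum (fun k => T k + U k) A n = zsum T A n + zsum U A n.
Proof. induction n; simpl. ring. rewrite IHn. ring. Qed.

Lemma zsum_scal a T A n : zsum (fun k => a * T k) A n = a * zsum T A n.
Proof. induction n; simpl. ring. rewrite IHn. ring. Qed.

Lemma zsum_const a A n : zsum (fun _ => a) A n = INR n * a.
Proof. induction n. simpl. ring. rewrite zsum_succ, IHn, S_INR. ring. Qed.

Lemma zsum_ext T U A n : (forall k, T k = U k) -> zsum T A n = zsum U A n.
Proof. intros H. induction n; simpl; auto. rewrite IHn, H. auto. Qed.

Lemma zsum_telescope F A n : zsum (fun k => F (k + 1)%Z - F k) A n = F (A + Z.of_nat n)%Z - F A.
Proof.
  induction n; simpl. rewrite Z.add_0_r. ring.
  rewrite IHn. replace (A + Z.pos (Pos.of_succ_nat n))%Z with (A + Z.of_nat n + 1)%Z by lia. ring.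
Qed.

Lemma zsum_sub_range T A n A' n' : (forall k, 0 <= T k) -> (A <= A')%Z ->
  (A' + Z.of_nat n' <= A + Z.of_nat n)%Z -> zsum T A' n' <= zsum T A n.
Proof.
  intros HT h1 h2.
  set (a := Z.to_nat (A' - A)). set (r := (n - a - n')%nat).
  assert (En : n = (a + (n' + r))%nat) by (unfold r, a; lia).
  rewrite En, zsum_add, zsum_add.
  replace (A + Z.of_nat a)%Z with A' by (unfold a; lia).
  pose proof (zsum_nonneg T A a HT). pose proof (zsum_nonneg T (A' + Z.of_nat n') r HT). lra.
Qed.

(* The partial sums used in [disc_entropy_is] run over [-N-1, N]. *)
Lemma sum_f_R0_zsum T N : sum_f_R0 (fun n => T (Z.of_nat n) + T (- Z.of_nat n - 1)%Z) N =
  zsum T (- Z.of_nat (S N))%Z (2 * S N).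
Proof.
  induction N as [|N IH].
  - simpl. replace (-1 + 1)%Z with 0%Z by lia. replace (-1+0)%Z with (-1)%Z by lia. ring.
  - rewrite tech5, IH.
    replace (2 * S (S N))%nat with (S (S (2 * S N)))%nat by lia.
    rewrite zsum_cons, zsum_succ.
    replace (- Z.of_nat (S (S N)) + 1)%Z with (- Z.of_nat (S N))%Z by lia.
    replace (- Z.of_nat (S N) + Z.of_nat (2 * S N))%Z with (Z.of_nat (S N)) by lia.
    replace (- Z.of_nat (S (S N)))%Z with (- Z.of_nat (S N) - 1)%Z by lia.
    ring.
Qed.

Lemma sum_f_R0_pairs_growing (T : Z -> R) : (forall k, 0 <= T k) ->
  Un_growing (fun N => sum_f_R0 (fun n => T (Z.of_nat n) + T (- Z.of_nat n - 1)%Z) N).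
Proof.
  intros H N. rewrite tech5.
  pose proof (H (Z.of_nat (S N))). pose proof (H (- Z.of_nat (S N) - 1)%Z). lra.
Qed.

Lemma zsum_tail_small T V : (forall k, 0 <= T k) ->
  infinite_sum (fun n => T (Z.of_nat n) + T (- Z.of_nat n - 1)%Z) V ->
  forall eps, 0 < eps -> exists J : nat, forall A n,
    ((Z.of_nat J <= A)%Z \/ (A + Z.of_nat n <= - Z.of_nat J)%Z) -> zsum T A n <= eps.
Proof.
  intros HT HV eps he.
  destruct (HV (eps / 2) ltac:(lra)) as [N0 HN0].
  exists (S N0). intros A n Hr.
  set (N' := (N0 + Z.to_nat (Z.abs A) + n)%nat).
  assert (d0 := HN0 N0 (le_n _)). assert (d1 := HN0 N' ltac:(unfold N'; lia)).
  rewrite sum_f_R0_zsum in d0, d1. unfold R_dist in d0, d1.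
  apply Rabs_def2 in d0. apply Rabs_def2 in d1.
  set (k := (N' - N0)%nat).
  assert (Edec : zsum T (- Z.of_nat (S N')) (2 * S N') =
     zsum T (- Z.of_nat (S N')) k + zsum T (- Z.of_nat (S N0)) (2 * S N0) + zsum T (Z.of_nat (S N0)) k).
  { replace (2 * S N')%nat with (k + (2 * S N0 + k))%nat by (unfold k, N'; lia).
    rewrite zsum_add, zsum_add.
    replace (- Z.of_nat (S N') + Z.of_nat k)%Z with (- Z.of_nat (S N0))%Z by (unfold k, N'; lia).
    replace (- Z.of_nat (S N0) + Z.of_nat (2 * S N0))%Z with (Z.of_nat (S N0)) by lia. ring. }
  pose proof (zsum_nonneg T (- Z.of_nat (S N')) k HT).
  pose proof (zsum_nonneg T (Z.of_nat (S N0)) k HT).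
  destruct Hr as [Hr|Hr].
  - apply Rle_trans with (zsum T (Z.of_nat (S N0)) k).
    apply zsum_sub_range; auto; unfold k, N'; lia. lra.
  - apply Rle_trans with (zsum T (- Z.of_nat (S N')) k).
    apply zsum_sub_range; auto; unfold k, N'; lia. lra.
Qed.

Lemma zsum_supported_le (g : Z -> R) x y A n : x <= y ->
  (forall k, 0 <= g k <= 1) -> (forall k, 0 < g k -> x < IZR k < y) ->
  zsum g A n <= y - x + 1.
Proof.
  intros hxy hg hs.
  set (F := fun z : Z => clamp (y - x + 1) (IZR z - x)).
  assert (Hb : forall k, g k <= F (k + 1)%Z - F k).
  { intro k. unfold F. rewrite plus_IZR.
    destruct (Rlt_or_le 0 (g k)) as [h|h].
    - specialize (hs k h). rewrite !clamp_id by lra. pose proof (hg k). lra.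
    - pose proof (clamp_mono (y - x + 1) (IZR k - x) (IZR k + 1 - x) ltac:(lra)). lra. }
  eapply Rle_trans. apply zsum_le with (U := fun k => F (k + 1)%Z - F k). intros; apply Hb.
  rewrite zsum_telescope. unfold F.
  pose proof (clamp_range (y - x + 1) (IZR (A + Z.of_nat n) - x) ltac:(lra)).
  pose proof (clamp_range (y - x + 1) (IZR A - x) ltac:(lra)). lra.
Qed.

Fixpoint lsum (D : list R) (g : R -> R) : R :=
  match D with nil => 0 | d :: D' => g d + lsum D' g end.

Lemma lsum_le D g h : (forall d, In d D -> g d <= h d) -> lsum D g <= lsum D h.
Proof.
  induction D as [|d D IH]; simpl; intros H. lra.
  apply Rplus_le_compat. apply H; auto. apply IH; auto.
Qed.

Lemma lsum_const D a : lsum D (fun _ => a) = INR (length D) * a.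
Proof. induction D; simpl lsum. simpl; ring. rewrite IHD. simpl length. rewrite S_INR. ring. Qed.

Lemma lsum_nonneg D g : (forall d, 0 <= g d) -> 0 <= lsum D g.
Proof. induction D; simpl; intros. lra. specialize (IHD H). specialize (H a). lra. Qed.

Lemma lsum_ge D g d : (forall d, 0 <= g d) -> In d D -> g d <= lsum D g.
Proof.
  induction D as [|d' D IH]; simpl; intros H i. tauto.
  destruct i as [->|i]. pose proof (lsum_nonneg D g H). lra.
  specialize (IH H i). specialize (H d'). lra.
Qed.

Lemma zsum_lsum D (g : R -> Z -> R) A n :
  zsum (fun k => lsum D (fun d => g d k)) A n = lsum D (fun d => zsum (g d) A n).
Proof.
  induction D as [|d D IH]; simpl.
  - rewrite zsum_const. ring.
  - rewrite zsum_plus, IH. reflexivity.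
Qed.

(** * Quantization bins *)

(* The [k]-th bin of mesh [1/M] shifted by [c] is [[bin_lo M c k, bin_lo M c (k+1))], the event
   [[X + c]_M = k/M]. *)
Definition bin_lo (M c : R) (k : Z) : R := (IZR k - /2) / M - c.

Definition bin_mass (p : R -> R) M c k := RInt p (bin_lo M c k) (bin_lo M c (k + 1)).

(* [ent_term] of a bin minus its share [bin_mass * ln M] of [ln M]. *)
Definition bin_ent p M c k := - (bin_mass p M c k * ln (M * bin_mass p M c k)).

Definition bin_xlnx p M c k := RInt (fun x => xlnx (p x)) (bin_lo M c k) (bin_lo M c (k + 1)).

Definition bin_defect p M c k := bin_ent p M c k + bin_xlnx p M c k.

Lemma bin_lo_succ M c k : 0 < M -> bin_lo M c (k + 1) = bin_lo M c k + / M.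
Proof. intros. unfold bin_lo. rewrite plus_IZR. field. lra. Qed.

Lemma bin_lo_add M c k n : 0 < M -> bin_lo M c (k + Z.of_nat n) = bin_lo M c k + INR n / M.
Proof. intros. unfold bin_lo. rewrite plus_IZR, <- INR_IZR_INZ. field. lra. Qed.

Lemma bin_lo_lt M c k : 0 < M -> bin_lo M c k < bin_lo M c (k + 1).
Proof. intros. rewrite bin_lo_succ by auto. pose proof (Rinv_0_lt_compat M H). lra. Qed.

Lemma bin_lo_mono M c k n : 0 < M -> bin_lo M c k <= bin_lo M c (k + Z.of_nat n).
Proof. intros. rewrite bin_lo_add by auto. pose proof (Rdiv_nonneg (INR n) M (pos_INR n) H). lra. Qed.

Lemma bin_lo_le_inv M c a b : 0 < M -> bin_lo M c a <= bin_lo M c b -> (a <= b)%Z.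
Proof.
  intros HM h. destruct (Z_le_gt_dec a b) as [ok|bad]; auto. exfalso.
  assert (bin_lo M c b < bin_lo M c a).
  { replace a with (b + Z.of_nat (Z.to_nat (a - b - 1)) + 1)%Z by lia.
    eapply Rle_lt_trans. apply bin_lo_mono with (n := Z.to_nat (a - b - 1)); auto. apply bin_lo_lt; auto. }
  lra.
Qed.

Lemma bin_lo_cover M c x : 0 < M -> exists k, bin_lo M c k <= x < bin_lo M c (k + 1).
Proof.
  intros HM. set (z := M * (x + c) + /2). destruct (archimed z) as [a1 a2].
  assert (zE : z = M * x + M * c + /2) by (unfold z; ring).
  exists (up z - 1)%Z. unfold bin_lo. rewrite minus_IZR, plus_IZR, minus_IZR. split.
  - apply (Rmult_le_reg_l M); auto.
    replace (M * ((IZR (up z) - 1 - / 2) / M - c)) with (IZR (up z) - 1 - /2 - M * c) by (field; lra).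
    lra.
  - apply (Rmult_lt_reg_l M); auto.
    replace (M * ((IZR (up z) - 1 + 1 - / 2) / M - c)) with (IZR (up z) - /2 - M * c) by (field; lra).
    lra.
Qed.

Lemma bin_range_covers M c R : 0 < M -> exists N0 : nat, forall N, (N0 <= N)%nat ->
  bin_lo M c (- Z.of_nat (S N)) <= - R /\ R <= bin_lo M c (- Z.of_nat (S N) + Z.of_nat (2 * S N)).
Proof.
  intros HM. destruct (INR_unbounded (M * (Rabs R + Rabs c))) as [N0 HN0].
  exists N0. intros N hN. apply le_INR in hN.
  pose proof (Rle_abs R). pose proof (Rle_abs c). pose proof (Rle_abs (- R)). pose proof (Rle_abs (- c)).
  rewrite Rabs_Ropp in *.
  assert (M * c <= M * Rabs c) by (apply Rmult_le_compat_l; lra).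
  assert (M * - c <= M * Rabs c) by (apply Rmult_le_compat_l; lra).
  assert (M * R <= M * Rabs R) by (apply Rmult_le_compat_l; lra).
  unfold bin_lo. split.
  - rewrite opp_IZR, <- INR_IZR_INZ, S_INR.
    apply (Rmult_le_reg_l M); auto.
    replace (M * ((- (INR N + 1) - / 2) / M - c)) with (- INR N - 1 - /2 - M * c) by (field; lra).
    nra.
  - replace (- Z.of_nat (S N) + Z.of_nat (2 * S N))%Z with (Z.of_nat (S N)) by lia.
    rewrite <- INR_IZR_INZ, S_INR.
    apply (Rmult_le_reg_l M); auto.
    replace (M * ((INR N + 1 - / 2) / M - c)) with (INR N + 1 - /2 - M * c) by (field; lra).
    nra.
Qed.

Lemma bin_range_split M c A n R : 0 < M -> / M <= 1 -> 0 <= R ->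
  bin_lo M c A <= - R - 1 -> R + 1 <= bin_lo M c (A + Z.of_nat n) ->
  exists nL nM nR, n = (nL + (nM + nR))%nat /\
    - R - 1 <= bin_lo M c (A + Z.of_nat nL) <= - R /\
    R <= bin_lo M c (A + Z.of_nat nL + Z.of_nat nM) <= R + 1.
Proof.
  intros HM iM hR hA hB.
  destruct (bin_lo_cover M c (- R) HM) as [kL [hL1 hL2]].
  destruct (bin_lo_cover M c R HM) as [k' [hR1 hR2]].
  rewrite bin_lo_succ in hL2, hR2 by auto.
  set (kR := (k' + 1)%Z).
  assert (hR3 : R <= bin_lo M c kR <= R + 1) by (unfold kR; rewrite bin_lo_succ by auto; lra).
  assert (AkL : (A <= kL)%Z) by (apply (bin_lo_le_inv M c); auto; lra).
  assert (kLkR : (kL <= kR)%Z) by (apply (bin_lo_le_inv M c); auto; lra).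
  assert (kRB : (kR <= A + Z.of_nat n)%Z) by (apply (bin_lo_le_inv M c); auto; lra).
  exists (Z.to_nat (kL - A)), (Z.to_nat (kR - kL)), (Z.to_nat (A + Z.of_nat n - kR)).
  replace (A + Z.of_nat (Z.to_nat (kL - A)))%Z with kL by lia.
  replace (kL + Z.of_nat (Z.to_nat (kR - kL)))%Z with kR by lia.
  repeat split; try lia; lra.
Qed.

Lemma bin_prob_bin_mass p M c k : bin_prob p M c k = bin_mass p M c k.
Proof.
  unfold bin_prob, bin_mass, bin_lo. rewrite plus_IZR.
  replace (IZR k + 1 - /2) with (IZR k + /2) by field. reflexivity.
Qed.

Lemma zsum_RInt_bins f M c A n : 0 < M -> loc_int f ->
  zsum (fun k => RInt f (bin_lo M c k) (bin_lo M c (k + 1))) A n =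
  RInt f (bin_lo M c A) (bin_lo M c (A + Z.of_nat n)).
Proof.
  intros HM If. induction n as [|n IH].
  - simpl. rewrite Z.add_0_r, RInt_point. reflexivity.
  - rewrite zsum_succ, IH. replace (A + Z.of_nat (S n))%Z with (A + Z.of_nat n + 1)%Z by lia.
    apply RInt_chasles; apply If. apply bin_lo_mono; auto. left; apply bin_lo_lt; auto.
Qed.

Definition density (p : R -> R) := (forall x, 0 <= p x) /\ loc_int p /\ Un_cv (sym_int p) 1.

Section Bins.
Variables (p : R -> R) (M c : R).
Hypotheses (p_density : density p) (M_pos : 0 < M).

Let p_ge0 : forall x, 0 <= p x := proj1 p_density.
Let p_loc : loc_int p := proj1 (proj2 p_density).
Let p_cv : Un_cv (sym_int p) 1 := proj2 (proj2 p_density).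

Lemma bin_mass_ge0 k : 0 <= bin_mass p M c k.
Proof. pose proof (bin_lo_lt M c k M_pos). apply RInt_ge0; auto; [lra|apply p_loc; lra]. Qed.

Lemma bin_mass_le1 k : bin_mass p M c k <= 1.
Proof. apply RInt_le_lim; auto. left; apply bin_lo_lt; auto. Qed.

Lemma bin_mass_le k B : (forall x, bin_lo M c k <= x <= bin_lo M c (k + 1) -> p x <= B) ->
  bin_mass p M c k <= B / M.
Proof.
  intros H. unfold bin_mass. pose proof (bin_lo_lt M c k M_pos).
  apply Rle_trans with (RInt (fun _ => B) (bin_lo M c k) (bin_lo M c (k + 1))).
  - apply RInt_le; auto. lra. apply p_loc; lra. apply Rintegrable_const.
  - rewrite RInt_const, bin_lo_succ by auto. right. field. lra.
Qed.

Lemma bin_mass_scaled_range k B : (forall x, bin_lo M c k <= x <= bin_lo M c (k + 1) -> p x <= B) ->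
  0 <= M * bin_mass p M c k <= B.
Proof.
  intros H. pose proof (bin_mass_le k B H). pose proof (bin_mass_ge0 k).
  split. apply Rmult_le_pos; lra.
  apply Rle_trans with (M * (B / M)). apply Rmult_le_compat_l; lra. right; field; lra.
Qed.

Lemma ent_term_bin_mass k : ent_term (bin_mass p M c) k = bin_ent p M c k + bin_mass p M c k * ln M.
Proof.
  unfold ent_term, bin_ent. pose proof (bin_mass_ge0 k).
  destruct (Req_dec (bin_mass p M c k) 0) as [E|E].
  - rewrite E. ring.
  - rewrite ln_mult by lra. ring.
Qed.

Lemma ent_term_bin_mass_ge0 k : 0 <= ent_term (bin_mass p M c) k.
Proof.
  unfold ent_term. change (0 <= - xlnx (bin_mass p M c k)).
  pose proof (xlnx_nonpos _ (conj (bin_mass_ge0 k) (bin_mass_le1 k))). lra.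
Qed.

Lemma bin_ent_xlnx k : bin_ent p M c k = - xlnx (M * bin_mass p M c k) / M.
Proof. unfold bin_ent, xlnx. field. lra. Qed.

Lemma zsum_ent_term A n : zsum (ent_term (bin_mass p M c)) A n =
  zsum (bin_ent p M c) A n + ln M * RInt p (bin_lo M c A) (bin_lo M c (A + Z.of_nat n)).
Proof.
  rewrite (zsum_ext _ (fun k => bin_ent p M c k + ln M * bin_mass p M c k)).
  - rewrite zsum_plus, zsum_scal. unfold bin_mass. rewrite zsum_RInt_bins by auto. reflexivity.
  - intro k. rewrite ent_term_bin_mass. ring.
Qed.

Lemma bin_ent_le_tangent k t : 0 < t ->
  bin_ent p M c k <= - bin_mass p M c k * ln t + t / M - bin_mass p M c k.
Proof.
  intros ht. unfold bin_ent. pose proof (bin_mass_ge0 k) as P0.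
  set (P := bin_mass p M c k) in *.
  destruct (Req_dec P 0) as [E|E].
  - rewrite E. pose proof (Rdiv_nonneg t M ltac:(lra) M_pos). lra.
  - assert (MP : 0 < M * P) by (apply Rmult_lt_0_compat; lra).
    pose proof (ln_le_sub1 (t / (M * P)) ltac:(apply Rdiv_lt_0_compat; lra)).
    unfold Rdiv in H. rewrite ln_mult, ln_Rinv in H by (try apply Rinv_0_lt_compat; lra).
    apply (Rmult_le_compat_l P) in H; [|lra].
    replace (P * (t * / (M * P) - 1)) with (t / M - P) in H by (field; lra).
    lra.
Qed.

Lemma zsum_bin_ent_le_tangent A n t : 0 < t ->
  zsum (bin_ent p M c) A n <= - zsum (bin_mass p M c) A n * ln t + INR n * t / M - zsum (bin_mass p M c) A n.
Proof.
  intros ht. eapply Rle_trans.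
  - apply zsum_le with (U := fun k => (- ln t) * bin_mass p M c k + (t / M + (-1) * bin_mass p M c k)).
    intros i _. pose proof (bin_ent_le_tangent (A + Z.of_nat i) t ht). lra.
  - rewrite zsum_plus, zsum_scal, zsum_plus, zsum_const, zsum_scal. right. field. lra.
Qed.

(* Log-sum inequality, from the tangent bound at [t = M S / n]. *)
Lemma zsum_bin_ent_le A n : INR n <= M -> zsum (bin_ent p M c) A n <= - xlnx (zsum (bin_mass p M c) A n).
Proof.
  intros Hn. set (S := zsum (bin_mass p M c) A n).
  assert (S0 : 0 <= S) by (apply zsum_nonneg; intro; apply bin_mass_ge0).
  pose proof (pos_INR n).
  destruct (Req_dec S 0) as [E|E].
  - rewrite E, (xlnx_nonpos_arg 0), Ropp_0 by lra.
    destruct (Rle_or_lt (zsum (bin_ent p M c) A n) 0) as [h|h]; auto. exfalso.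
    set (x := zsum (bin_ent p M c) A n) in *.
    pose proof (zsum_bin_ent_le_tangent A n (x * M / (INR n + 1))
      ltac:(apply Rdiv_lt_0_compat; [apply Rmult_lt_0_compat|]; lra)) as gen.
    fold S x in gen. rewrite E in gen.
    replace (- 0 * ln (x * M / (INR n + 1)) + INR n * (x * M / (INR n + 1)) / M - 0)
      with (x - x / (INR n + 1)) in gen by (field; lra).
    assert (0 < x / (INR n + 1)) by (apply Rdiv_lt_0_compat; lra). lra.
  - assert (np : 0 < INR n).
    { destruct n. exfalso. apply E. reflexivity. apply lt_0_INR; lia. }
    pose proof (zsum_bin_ent_le_tangent A n (M * S / INR n)
      ltac:(apply Rdiv_lt_0_compat; [apply Rmult_lt_0_compat|]; lra)) as gen.
    fold S in gen. unfold Rdiv in gen.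
    rewrite ln_mult, ln_mult, ln_Rinv in gen by (try apply Rmult_lt_0_compat; try apply Rinv_0_lt_compat; lra).
    pose proof (ln_le_mono (INR n) M np Hn).
    unfold xlnx.
    replace (- S * (ln M + ln S + - ln (INR n)) + INR n * (M * S * / INR n) * / M - S)
      with (- (S * ln S) - S * (ln M - ln (INR n))) in gen by (field; lra).
    assert (0 <= S * (ln M - ln (INR n))) by (apply Rmult_le_pos; lra).
    lra.
Qed.

Section LocIntXlnx.
Hypothesis xlnx_p_loc : loc_int (fun x => xlnx (p x)).

Lemma bin_xlnx_ge_tangent k a : 0 < a ->
  xlnx a / M + (1 + ln a) * (bin_mass p M c k - a / M) <= bin_xlnx p M c k.
Proof.
  intros ha. unfold bin_xlnx.
  set (u := bin_lo M c k). set (v := bin_lo M c (k + 1)).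
  assert (uv : u < v) by (apply bin_lo_lt; auto).
  assert (vu : v - u = / M) by (unfold u, v; rewrite bin_lo_succ; auto; ring).
  set (C := xlnx a - (1 + ln a) * a).
  assert (Ilin : Rintegrable (fun x => C + (1 + ln a) * p x) u v).
  { apply Rintegrable_lin. apply Rintegrable_const. apply p_loc; lra. }
  assert (RInt (fun x => C + (1 + ln a) * p x) u v <= RInt (fun x => xlnx (p x)) u v).
  { apply RInt_le; auto. lra. apply xlnx_p_loc; lra.
    intros x _. pose proof (xlnx_tangent (p x) a (p_ge0 x) ha). unfold C. lra. }
  rewrite RInt_lin, RInt_const, vu in H by (auto using Rintegrable_const; apply p_loc; lra).
  replace (xlnx a / M + (1 + ln a) * (bin_mass p M c k - a / M))
    with (C * / M + (1 + ln a) * RInt p u v) by (unfold C, bin_mass; fold u v; field; lra).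
  exact H.
Qed.

(* Jensen's inequality for the convex function [xlnx] on one bin, with tangent point [M P]. *)
Lemma bin_defect_ge0 k : 0 <= bin_defect p M c k.
Proof.
  unfold bin_defect, bin_ent. pose proof (bin_mass_ge0 k).
  set (P := bin_mass p M c k) in *.
  destruct (Req_dec P 0) as [E|E].
  - rewrite E, Rmult_0_l, Ropp_0, Rplus_0_l.
    destruct (Rle_or_lt 0 (bin_xlnx p M c k)) as [F|F]; auto. exfalso.
    set (t := - bin_xlnx p M c k).
    pose proof (bin_xlnx_ge_tangent k (t / 2 * M) ltac:(apply Rmult_lt_0_compat; unfold t; lra)) as tb.
    fold P in tb. rewrite E in tb. unfold xlnx in tb.
    replace (t / 2 * M * ln (t / 2 * M) / M + (1 + ln (t / 2 * M)) * (0 - t / 2 * M / M))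
      with (- (t / 2)) in tb by (field; lra).
    unfold t in tb. lra.
  - pose proof (bin_xlnx_ge_tangent k (M * P) ltac:(apply Rmult_lt_0_compat; lra)) as tb.
    fold P in tb. unfold xlnx in tb.
    replace (M * P * ln (M * P) / M + (1 + ln (M * P)) * (P - M * P / M)) with (P * ln (M * P)) in tb
      by (field; lra).
    lra.
Qed.

Lemma zsum_bin_ent_ge A n :
  - RInt (fun x => xlnx (p x)) (bin_lo M c A) (bin_lo M c (A + Z.of_nat n)) <= zsum (bin_ent p M c) A n.
Proof.
  assert (0 <= zsum (bin_defect p M c) A n) by (apply zsum_nonneg; intro k; apply bin_defect_ge0).
  unfold bin_defect in H. rewrite zsum_plus in H. unfold bin_xlnx in H.
  rewrite zsum_RInt_bins in H by auto. lra.
Qed.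

Lemma bin_defect_le k B : 1 <= B ->
  (forall x, bin_lo M c k <= x <= bin_lo M c (k + 1) -> p x <= B) ->
  bin_defect p M c k <= 2 * (1 + B * ln B) / M.
Proof.
  intros HB H. pose proof (bin_lo_lt M c k M_pos).
  set (C := 1 + B * ln B).
  assert (bin_xlnx p M c k <= C / M).
  { unfold bin_xlnx. apply Rle_trans with (RInt (fun _ => C) (bin_lo M c k) (bin_lo M c (k + 1))).
    - apply RInt_le; auto. lra. apply xlnx_p_loc; lra. apply Rintegrable_const.
      intros x hx. pose proof (Rabs_le_inv _ _ (Rabs_xlnx_le (p x) B HB (conj (p_ge0 x) (H x hx)))). unfold C; lra.
    - rewrite RInt_const, bin_lo_succ by auto. right. field. lra. }
  unfold bin_defect. rewrite bin_ent_xlnx.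
  pose proof (bin_mass_scaled_range k B H) as aB.
  pose proof (Rabs_le_inv _ _ (Rabs_xlnx_le _ B HB aB)).
  assert (- xlnx (M * bin_mass p M c k) / M <= C / M).
  { unfold Rdiv. apply Rmult_le_compat_r. left; apply Rinv_0_lt_compat; auto. unfold C; lra. }
  replace (2 * (1 + B * ln B) / M) with (C / M + C / M) by (unfold C; field; lra). lra.
Qed.

Lemma bin_defect_le_osc k B eps1 eta1 : 1 <= B ->
  (forall x, bin_lo M c k <= x <= bin_lo M c (k + 1) -> p x <= B) ->
  (forall s t, 0 <= s <= B -> 0 <= t <= B -> Rabs (s - t) <= eps1 -> Rabs (xlnx s - xlnx t) <= eta1) ->
  (forall x y, bin_lo M c k <= x <= bin_lo M c (k + 1) -> bin_lo M c k <= y <= bin_lo M c (k + 1) ->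
     Rabs (p x - p y) <= eps1) ->
  bin_defect p M c k <= eta1 / M.
Proof.
  intros HB H Hxlnx Hosc.
  pose proof (bin_lo_lt M c k M_pos) as ll.
  set (u := bin_lo M c k) in *. set (v := bin_lo M c (k + 1)) in *.
  assert (vu : v - u = / M) by (unfold u, v; rewrite bin_lo_succ; auto; ring).
  set (a := M * bin_mass p M c k).
  pose proof (bin_mass_scaled_range k B H) as aB. fold a in aB.
  assert (near : forall x, u <= x <= v -> Rabs (p x - a) <= eps1).
  { intros x hx.
    assert (lb : (p x - eps1) * (v - u) <= bin_mass p M c k).
    { unfold bin_mass. fold u v. rewrite <- RInt_const.
      apply RInt_le. lra. apply Rintegrable_const. apply p_loc; lra.
      intros y hy. pose proof (Rabs_le_inv _ _ (Hosc x y hx hy)). lra. }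
    assert (ub : bin_mass p M c k <= (p x + eps1) * (v - u)).
    { unfold bin_mass. fold u v. rewrite <- RInt_const.
      apply RInt_le. lra. apply p_loc; lra. apply Rintegrable_const.
      intros y hy. pose proof (Rabs_le_inv _ _ (Hosc x y hx hy)). lra. }
    rewrite vu in lb, ub.
    apply (Rmult_le_compat_l M) in lb; [|lra]. apply (Rmult_le_compat_l M) in ub; [|lra].
    replace (M * ((p x - eps1) * / M)) with (p x - eps1) in lb by (field; lra).
    replace (M * ((p x + eps1) * / M)) with (p x + eps1) in ub by (field; lra).
    fold a in lb, ub. apply Rabs_le. lra. }
  assert (bin_xlnx p M c k <= (xlnx a + eta1) / M).
  { unfold bin_xlnx. fold u v. apply Rle_trans with (RInt (fun _ => xlnx a + eta1) u v).
    - apply RInt_le. lra. apply xlnx_p_loc; lra. apply Rintegrable_const.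
      intros x hx. pose proof (Rabs_le_inv _ _ (Hxlnx (p x) a (conj (p_ge0 x) (H x hx)) aB (near x hx))). lra.
    - rewrite RInt_const, vu. right. field. lra. }
  unfold bin_defect. rewrite bin_ent_xlnx. fold a.
  replace (eta1 / M) with (- xlnx a / M + (xlnx a + eta1) / M) by (field; lra). lra.
Qed.

End LocIntXlnx.
End Bins.

(** * Tails: comparison with [[X]_1] *)

Definition unit_mass (p : R -> R) (j : Z) := RInt p (IZR j - /2) (IZR j + /2).

Definition unit_ent p j := - xlnx (unit_mass p j).

Lemma bin_prob_unit_mass p j : bin_prob p 1 0 j = unit_mass p j.
Proof. unfold bin_prob, unit_mass. f_equal; field. Qed.

Lemma unit_mass_pair p j : loc_int p ->
  unit_mass p j + unit_mass p (j + 1) = RInt p (IZR j - /2) (IZR j + 3/2).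
Proof.
  intros I. unfold unit_mass. rewrite plus_IZR.
  replace (IZR j + 1 - /2) with (IZR j + /2) by field.
  replace (IZR j + 1 + /2) with (IZR j + 3/2) by field.
  apply RInt_chasles; apply I; lra.
Qed.

Section Tails.
Variables (p : R -> R) (m : nat) (c : R).
Hypotheses (p_density : density p) (m_pos : (1 <= m)%nat).

Let M := INR m.
Let M_pos : 0 < M := lt_0_INR m m_pos.
Let p_loc : loc_int p := proj1 (proj2 p_density).

Lemma unit_mass_ge0 j : 0 <= unit_mass p j.
Proof. apply RInt_ge0. lra. apply p_loc; lra. intros; apply p_density. Qed.

Lemma bin_lo_add_le_1 A r : (r <= m)%nat -> bin_lo M c (A + Z.of_nat r) <= bin_lo M c A + 1.
Proof.
  intros hr. rewrite bin_lo_add by auto.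
  assert (INR r / M <= 1).
  { apply (Rmult_le_reg_r M). auto. unfold Rdiv. rewrite Rmult_assoc, Rinv_l by lra.
    apply le_INR in hr. fold M in hr. lra. }
  lra.
Qed.

(* Log-sum inequality, then monotonicity of [- xlnx] below [1/4]. *)
Lemma block_ent_le A n j : (n <= m)%nat ->
  IZR j - /2 <= bin_lo M c A -> bin_lo M c (A + Z.of_nat n) <= IZR j + 3/2 ->
  unit_mass p j + unit_mass p (j + 1) <= /4 ->
  zsum (bin_ent p M c) A n <= unit_ent p j + unit_ent p (j + 1).
Proof.
  intros hn H1 H2 H3.
  eapply Rle_trans. apply zsum_bin_ent_le; auto. apply le_INR; auto.
  unfold bin_mass. rewrite (zsum_RInt_bins p) by auto.
  set (S := RInt p (bin_lo M c A) (bin_lo M c (A + Z.of_nat n))).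
  assert (S0 : 0 <= S).
  { apply RInt_ge0; [apply bin_lo_mono; auto | apply p_loc; apply bin_lo_mono; auto |]. intros; apply p_density. }
  assert (SQ : S <= unit_mass p j + unit_mass p (j + 1)).
  { rewrite unit_mass_pair by auto. apply RInt_le_sub_interval; auto. apply p_density. apply bin_lo_mono; auto. }
  unfold unit_ent.
  pose proof (xlnx_antimono_quarter S _ (conj S0 SQ) H3).
  pose proof (xlnx_superadditive _ _ (unit_mass_ge0 j) (unit_mass_ge0 (j + 1))). lra.
Qed.

Lemma right_tail_ent_le q A r j : (r <= m)%nat ->
  IZR j - /2 <= bin_lo M c A -> bin_lo M c A <= IZR j + /2 ->
  (forall j', (j <= j')%Z -> unit_mass p j' + unit_mass p (j' + 1) <= /4) ->
  zsum (bin_ent p M c) A (q * m + r) <= zsum (unit_ent p) j (S q) + zsum (unit_ent p) (j + 1) (S q).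
Proof.
  revert A j. induction q as [|q IH]; intros A j hr h1 h2 HQ.
  - simpl. rewrite !Z.add_0_r, !Rplus_0_l. apply block_ent_le; auto.
    + pose proof (bin_lo_add_le_1 A r hr). lra.
    + apply HQ; lia.
  - replace (S q * m + r)%nat with (m + (q * m + r))%nat by lia.
    rewrite zsum_add, (zsum_cons (unit_ent p) j (S q)), (zsum_cons (unit_ent p) (j + 1) (S q)).
    assert (E : bin_lo M c (A + Z.of_nat m) = bin_lo M c A + 1).
    { rewrite bin_lo_add by auto. unfold M. field. fold M. lra. }
    assert (zsum (bin_ent p M c) A m <= unit_ent p j + unit_ent p (j + 1)).
    { apply block_ent_le; auto. rewrite E. lra. apply HQ; lia. }
    assert (zsum (bin_ent p M c) (A + Z.of_nat m) (q * m + r) <=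
       zsum (unit_ent p) (j + 1) (S q) + zsum (unit_ent p) (j + 1 + 1) (S q)).
    { apply IH; auto; rewrite ?E, ?plus_IZR; try lra. intros j' hj'. apply HQ. lia. }
    lra.
Qed.

Lemma left_tail_ent_le q A r j : (r <= m)%nat ->
  IZR j - /2 <= bin_lo M c (A + Z.of_nat (r + q * m)) ->
  bin_lo M c (A + Z.of_nat (r + q * m)) <= IZR j + /2 ->
  (forall j', (j' <= j)%Z -> unit_mass p (j' - 1) + unit_mass p j' <= /4) ->
  zsum (bin_ent p M c) A (r + q * m) <=
  zsum (unit_ent p) (j - Z.of_nat q - 1) (S q) + zsum (unit_ent p) (j - Z.of_nat q) (S q).
Proof.
  revert j. induction q as [|q IH]; intros j hr h1 h2 HQ.
  - simpl. rewrite Nat.add_0_r in *. rewrite !Z.sub_0_r, !Z.add_0_r, !Rplus_0_l.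
    replace j with (j - 1 + 1)%Z at 2 by lia.
    pose proof (bin_lo_mono M c A r M_pos). pose proof (bin_lo_add_le_1 A r hr).
    apply block_ent_le; auto; rewrite ?minus_IZR; try lra.
    replace (j - 1 + 1)%Z with j by lia. apply HQ. lia.
  - replace (r + S q * m)%nat with (r + q * m + m)%nat in * by lia.
    rewrite zsum_add, (zsum_succ (unit_ent p) _ (S q)), (zsum_succ (unit_ent p) (j - Z.of_nat (S q)) (S q)).
    set (E0 := bin_lo M c (A + Z.of_nat (r + q * m))).
    assert (E : bin_lo M c (A + Z.of_nat (r + q * m + m)) = E0 + 1).
    { unfold E0. replace (A + Z.of_nat (r + q * m + m))%Z with (A + Z.of_nat (r + q * m) + Z.of_nat m)%Z by lia.
      rewrite bin_lo_add by auto. unfold M. field. fold M. lra. }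
    rewrite E in h1, h2.
    assert (zsum (bin_ent p M c) (A + Z.of_nat (r + q * m)) m <= unit_ent p (j - 1) + unit_ent p j).
    { replace j with (j - 1 + 1)%Z at 2 by lia.
      apply block_ent_le; auto; rewrite ?minus_IZR; fold E0; try lra.
      - replace (A + Z.of_nat (r + q * m) + Z.of_nat m)%Z with (A + Z.of_nat (r + q * m + m))%Z by lia.
        rewrite E. lra.
      - replace (j - 1 + 1)%Z with j by lia. apply HQ. lia. }
    assert (zsum (bin_ent p M c) A (r + q * m) <=
       zsum (unit_ent p) (j - 1 - Z.of_nat q - 1) (S q) + zsum (unit_ent p) (j - 1 - Z.of_nat q) (S q)).
    { apply IH; auto; rewrite ?minus_IZR; fold E0; try lra. intros j' hj'. apply HQ. lia. }
    replace (j - Z.of_nat (S q) - 1)%Z with (j - 1 - Z.of_nat q - 1)%Z by lia.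
    replace (j - Z.of_nat (S q))%Z with (j - 1 - Z.of_nat q)%Z by lia.
    replace (j - 1 - Z.of_nat q - 1 + Z.of_nat (S q))%Z with (j - 1)%Z by lia.
    replace (j - 1 - Z.of_nat q + Z.of_nat (S q))%Z with j by lia.
    lra.
Qed.

Lemma unit_bin_cover x : exists j : Z, IZR j - /2 <= x < IZR j + /2.
Proof.
  destruct (bin_lo_cover 1 0 x Rlt_0_1) as [j hj]. exists j.
  unfold bin_lo in hj. rewrite plus_IZR in hj.
  replace ((IZR j - / 2) / 1 - 0) with (IZR j - /2) in hj by field.
  replace ((IZR j + 1 - / 2) / 1 - 0) with (IZR j + /2) in hj by field. exact hj.
Qed.

(* Bins left of [-N]: group them by [m] into unit bins, where the entropy of [[X]_1] is small. *)
Lemma zsum_bin_ent_left_le A n (N J : nat) epsQ : (J + 1 <= N)%nat ->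
  (forall u v, u <= v -> v <= - (INR N - 1) -> RInt p u v <= /4) ->
  (forall A' n', (A' + Z.of_nat n' <= - Z.of_nat J)%Z -> zsum (unit_ent p) A' n' <= epsQ) ->
  bin_lo M c (A + Z.of_nat n) <= - INR N ->
  zsum (bin_ent p M c) A n <= 2 * epsQ.
Proof.
  intros hNJ Hmass HJ hA.
  destruct (unit_bin_cover (bin_lo M c (A + Z.of_nat n))) as [j [hj1 hj2]].
  assert (jle : (j <= - Z.of_nat N)%Z).
  { assert (IZR j < IZR (- Z.of_nat N + 1)) by (rewrite plus_IZR, opp_IZR, <- INR_IZR_INZ; lra).
    apply lt_IZR in H. lia. }
  rewrite (Nat.div_mod_eq n m), (Nat.add_comm (m * (n / m))), (Nat.mul_comm m) in *.
  set (q := (n / m)%nat) in *. set (r := (n mod m)%nat) in *.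
  assert (rm : (r < m)%nat) by (apply Nat.mod_upper_bound; lia).
  eapply Rle_trans.
  - apply (left_tail_ent_le q A r j); auto; try lia; try lra.
    intros j' hj'. replace (unit_mass p j') with (unit_mass p (j' - 1 + 1)) by (f_equal; lia).
    rewrite unit_mass_pair by auto. apply Hmass. lra.
    apply IZR_le in hj'. apply IZR_le in jle. rewrite opp_IZR, <- INR_IZR_INZ in jle. rewrite minus_IZR. lra.
  - assert (zsum (unit_ent p) (j - Z.of_nat q - 1) (S q) <= epsQ) by (apply HJ; rewrite Nat2Z.inj_succ; lia).
    assert (zsum (unit_ent p) (j - Z.of_nat q) (S q) <= epsQ) by (apply HJ; rewrite Nat2Z.inj_succ; lia).
    lra.
Qed.

Lemma zsum_bin_ent_right_le A n (N J : nat) epsQ : (J <= N)%nat ->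
  (forall u v, u <= v -> INR N - 1 <= u -> RInt p u v <= /4) ->
  (forall A' n', (Z.of_nat J <= A')%Z -> zsum (unit_ent p) A' n' <= epsQ) ->
  INR N <= bin_lo M c A ->
  zsum (bin_ent p M c) A n <= 2 * epsQ.
Proof.
  intros hNJ Hmass HJ hA.
  destruct (unit_bin_cover (bin_lo M c A)) as [j [hj1 hj2]].
  assert (jge : (Z.of_nat N <= j)%Z).
  { destruct (Z_le_gt_dec (Z.of_nat N) j) as [ok|bad]; auto.
    exfalso. assert (IZR j <= IZR (Z.of_nat N - 1)) by (apply IZR_le; lia).
    rewrite minus_IZR, <- INR_IZR_INZ in H. lra. }
  rewrite (Nat.div_mod_eq n m), (Nat.mul_comm m).
  set (q := (n / m)%nat). set (r := (n mod m)%nat).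
  assert (rm : (r < m)%nat) by (apply Nat.mod_upper_bound; lia).
  eapply Rle_trans.
  - apply (right_tail_ent_le q A r j); auto; try lia; try lra.
    intros j' hj'. rewrite unit_mass_pair by auto. apply Hmass. lra.
    apply IZR_le in hj'. apply IZR_le in jge. rewrite <- INR_IZR_INZ in jge. lra.
  - assert (zsum (unit_ent p) j (S q) <= epsQ) by (apply HJ; lia).
    assert (zsum (unit_ent p) (j + 1) (S q) <= epsQ) by (apply HJ; lia).
    lra.
Qed.

End Tails.

(** * The middle range: Jensen defects *)

Definition maxl (l : list R) : R := fold_right Rmax 0 l.

Lemma maxl_in x l : In x l -> x <= maxl l.
Proof.
  induction l as [|y l IH]; simpl. tauto.
  intros [->|H]. apply Rmax_l. apply Rle_trans with (maxl l). auto. apply Rmax_r.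
Qed.

Definition away_set (R1 rho : R) (D : list R) (x : R) : Prop :=
  - R1 <= x <= R1 /\ forall d, In d D -> rho <= Rabs (x - d).

Lemma away_set_compact R1 rho D : compact (away_set R1 rho D).
Proof.
  apply compact_P5.
  - intros y Hy. unfold complementary, away_set in Hy.
    destruct (Rlt_or_le y (- R1)) as [h|h].
    + exists (mkposreal (- R1 - y) ltac:(lra)). intros z Hz. unfold disc in Hz. simpl in Hz.
      intros [[Hz1 _] _]. apply Rabs_def2 in Hz. lra.
    + destruct (Rlt_or_le R1 y) as [h'|h'].
      * exists (mkposreal (y - R1) ltac:(lra)). intros z Hz. unfold disc in Hz. simpl in Hz.
        intros [[_ Hz1] _]. apply Rabs_def2 in Hz. lra.
      * assert (exists d, In d D /\ Rabs (y - d) < rho) as [d [hd hyd]].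
        { apply NNPP. intro nex. apply Hy. split. lra. intros d hd.
          destruct (Rlt_or_le (Rabs (y - d)) rho); auto. exfalso; apply nex; exists d; auto. }
        exists (mkposreal (rho - Rabs (y - d)) ltac:(lra)). intros z Hz. unfold disc in Hz. simpl in Hz.
        intros [_ Hk]. specialize (Hk d hd).
        assert (Rabs (z - d) <= Rabs (z - y) + Rabs (y - d)).
        { replace (z - d) with ((z - y) + (y - d)) by ring. apply Rabs_triang. }
        lra.
  - exists (- R1), R1. intros x [h _]. auto.
Qed.

Lemma unif_cont_away (p : R -> R) R1 rho D : 0 < rho ->
  (forall x, - R1 - 1 < x < R1 + 1 -> ~ In x D -> continuity_pt p x) ->
  forall eps, 0 < eps -> exists del, 0 < del /\ forall x y,
    away_set R1 rho D x -> away_set R1 rho D y -> Rabs (x - y) < del -> Rabs (p x - p y) < eps.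
Proof.
  intros hr hc eps he.
  assert (cK : forall x, away_set R1 rho D x -> continuity_pt p x).
  { intros x [hx hd]. apply hc. lra. intro i. specialize (hd x i). rewrite Rminus_diag, Rabs_R0 in hd. lra. }
  destruct (Heine p _ (away_set_compact R1 rho D) cK (mkposreal eps he)) as [del Hd].
  exists del. split. apply cond_pos. intros x y hx hy hxy. apply Hd; auto.
Qed.

Definition near_bin (M c rho d : R) (k : Z) : R :=
  if Rlt_dec (bin_lo M c k) (d + rho) then (if Rlt_dec (d - rho) (bin_lo M c (k + 1)) then 1 else 0) else 0.

Lemma near_bin_range M c rho d k : 0 <= near_bin M c rho d k <= 1.
Proof. unfold near_bin. destruct (Rlt_dec _ _); [destruct (Rlt_dec _ _)|]; lra. Qed.

Lemma zsum_near_bin_le M c rho d A n : 0 < M -> 0 < rho -> zsum (near_bin M c rho d) A n <= 2 * rho * M + 2.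
Proof.
  intros HM hr.
  replace (2 * rho * M + 2) with ((M * (d + rho + c) + /2) - (M * (d - rho + c) - /2) + 1) by field.
  apply zsum_supported_le. nra. apply near_bin_range.
  intros k hk. unfold near_bin in hk.
  destruct (Rlt_dec (bin_lo M c k) (d + rho)) as [h1|h1]; [|lra].
  destruct (Rlt_dec (d - rho) (bin_lo M c (k + 1))) as [h2|h2]; [|lra].
  unfold bin_lo in h1, h2. rewrite plus_IZR in h2.
  apply (Rmult_lt_compat_l M) in h1, h2; auto.
  replace (M * ((IZR k + 1 - / 2) / M - c)) with (IZR k + /2 - M * c) in h2 by (field; lra).
  replace (M * ((IZR k - / 2) / M - c)) with (IZR k - /2 - M * c) in h1 by (field; lra).
  split; nra.
Qed.

(* [eta] is split as [eta/2] for the bins where [p] oscillates little, and [eta/4 + eta/4] for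
   the at most [2 rho M + 2] bins meeting the [rho]-neighbourhood of each discontinuity, each of
   which costs [2 C / M]. *)
Lemma mid_defect_budget eta R1 C nD M n : 0 < eta -> 0 <= R1 -> 1 <= C -> 0 <= nD -> 0 < M ->
  n / M <= 2 * R1 -> 16 * C * (nD + 1) / eta <= M ->
  n * (eta / (2 * (2 * R1 + 1)) / M) +
  2 * C / M * (nD * (2 * (eta / (16 * C * (nD + 1))) * M + 2)) <= eta.
Proof.
  intros he hR hC hnD HM hn hM.
  assert (n * (eta / (2 * (2 * R1 + 1)) / M) <= eta / 2).
  { replace (n * (eta / (2 * (2 * R1 + 1)) / M)) with (n / M * (eta / (2 * (2 * R1 + 1)))) by (field; lra).
    apply Rle_trans with ((2 * R1 + 1) * (eta / (2 * (2 * R1 + 1)))).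
    - apply Rmult_le_compat_r; [apply Rdiv_nonneg|]; lra.
    - right. field. lra. }
  replace (2 * C / M * (nD * (2 * (eta / (16 * C * (nD + 1))) * M + 2)))
    with (eta / 4 * (nD / (nD + 1)) + 4 * C * nD / M) by (field; lra).
  assert (eta / 4 * (nD / (nD + 1)) <= eta / 4).
  { rewrite <- (Rmult_1_r (eta / 4)) at 2. apply Rmult_le_compat_l. lra.
    apply (Rmult_le_reg_r (nD + 1)). lra. unfold Rdiv. rewrite Rmult_assoc, Rinv_l by lra. lra. }
  assert (4 * C * nD / M <= eta / 4).
  { apply (Rmult_le_reg_r M). auto. unfold Rdiv. rewrite Rmult_assoc, Rinv_l by lra.
    assert (hMe : 16 * C * (nD + 1) / eta * eta <= M * eta) by (apply Rmult_le_compat_r; lra).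
    replace (16 * C * (nD + 1) / eta * eta) with (16 * C * (nD + 1)) in hMe by (field; lra).
    nra. }
  lra.
Qed.

Section PiecewiseContinuous.
Variables (p : R -> R) (L : R).
Hypotheses (p_density : density p)
  (p_pc : forall a b, a < b -> exists D : list R, forall x, a < x < b -> ~ In x D -> continuity_pt p x)
  (p_le_L : forall x, continuity_pt p x -> p x <= L).

Let p_ge0 : forall x, 0 <= p x := proj1 p_density.
Let p_loc : loc_int p := proj1 (proj2 p_density).

(* Off its finitely many discontinuities [p] is bounded by [L]; at them by their largest value. *)
Lemma pc_local_bound a b : a < b -> exists D B, 1 <= B /\
  (forall x, a < x < b -> ~ In x D -> continuity_pt p x) /\ (forall x, a < x < b -> p x <= B).
Proof.
  intros ab. destruct (p_pc a b ab) as [D HD].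
  exists D, (Rmax 1 (Rmax L (maxl (map p D)))). split; [apply Rmax_l|split; auto].
  intros x hx. destruct (classic (In x D)) as [i|n].
  - apply Rle_trans with (maxl (map p D)). apply maxl_in, in_map; auto.
    eapply Rle_trans; [|apply Rmax_r]. apply Rmax_r.
  - apply Rle_trans with L. apply p_le_L, HD; auto.
    eapply Rle_trans; [|apply Rmax_r]. apply Rmax_l.
Qed.

Lemma loc_int_xlnx_comp : loc_int (fun x => xlnx (p x)).
Proof.
  intros a b hab. destruct (pc_local_bound (a - 1) (b + 1) ltac:(lra)) as [D [B [HB [_ HBx]]]].
  apply (Rintegrable_xlnx_comp p a b B); auto.
  intros x hx. split; auto. apply HBx. lra.
Qed.

Lemma bin_inside M c kL n i : 0 < M -> (i < n)%nat ->
  bin_lo M c kL <= bin_lo M c (kL + Z.of_nat i) /\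
  bin_lo M c (kL + Z.of_nat i + 1) <= bin_lo M c (kL + Z.of_nat n).
Proof.
  intros HM hi. split. apply bin_lo_mono; auto.
  replace (kL + Z.of_nat n)%Z with (kL + Z.of_nat i + 1 + Z.of_nat (n - i - 1))%Z by lia.
  apply bin_lo_mono; auto.
Qed.

Lemma mid_defect_bounded R1 : 0 <= R1 -> exists K, forall m c kL n, (1 <= m)%nat ->
  - R1 <= bin_lo (INR m) c kL -> bin_lo (INR m) c (kL + Z.of_nat n) <= R1 ->
  zsum (bin_defect p (INR m) c) kL n <= K.
Proof.
  intros hR. destruct (pc_local_bound (- R1 - 1) (R1 + 1) ltac:(lra)) as [D [B [HB [_ HBx]]]].
  set (C := 1 + B * ln B).
  exists (2 * C * (2 * R1)). intros m c kL n hm h1 h2.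
  set (M := INR m) in *. assert (HM : 0 < M) by (apply lt_0_INR; lia).
  eapply Rle_trans. apply zsum_le with (U := fun _ => 2 * C / M).
  - intros i hi. destruct (bin_inside M c kL n i HM hi).
    pose proof (bin_lo_lt M c (kL + Z.of_nat i) HM).
    apply bin_defect_le; auto. apply loc_int_xlnx_comp. intros; apply HBx; lra.
  - rewrite zsum_const. rewrite bin_lo_add in h2 by auto.
    replace (INR n * (2 * C / M)) with (2 * C * (INR n / M)) by (field; lra).
    assert (0 <= C) by (unfold C; pose proof (ln_nonneg B HB); nra).
    apply Rmult_le_compat_l; lra.
Qed.

(* A bin inside [[-R1, R1]] either meets a [rho]-neighbourhood of a discontinuity, where only the
   crude bound holds, or lies in [away_set], where [p] oscillates little on it. *)
Lemma bin_defect_le_near R1 D B rho eps1 eta1 del M c k : 1 <= B -> 0 <= eta1 -> 0 < M -> / M < del ->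
  (forall x, - R1 <= x <= R1 -> p x <= B) ->
  (forall s t, 0 <= s <= B -> 0 <= t <= B -> Rabs (s - t) <= eps1 -> Rabs (xlnx s - xlnx t) <= eta1) ->
  (forall x y, away_set R1 rho D x -> away_set R1 rho D y -> Rabs (x - y) < del ->
     Rabs (p x - p y) < eps1) ->
  - R1 <= bin_lo M c k -> bin_lo M c (k + 1) <= R1 ->
  bin_defect p M c k <= eta1 / M + 2 * (1 + B * ln B) / M * lsum D (fun d => near_bin M c rho d k).
Proof.
  intros HB he1 HM Hdel HBx Hxlnx Hosc lk1 lk2. pose proof (bin_lo_lt M c k HM).
  assert (hBk : forall x, bin_lo M c k <= x <= bin_lo M c (k + 1) -> p x <= B) by (intros; apply HBx; lra).
  assert (C0 : 0 <= 2 * (1 + B * ln B) / M) by (apply Rdiv_nonneg; auto; pose proof (ln_nonneg B HB); nra).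
  pose proof (lsum_nonneg D (fun d => near_bin M c rho d k) (fun d => proj1 (near_bin_range M c rho d k))).
  destruct (classic (exists d, In d D /\ near_bin M c rho d k = 1)) as [[d [hd hi1]]|nex].
  - pose proof (bin_defect_le p M c p_density HM loc_int_xlnx_comp k B HB hBk).
    pose proof (lsum_ge D (fun d => near_bin M c rho d k) d (fun d => proj1 (near_bin_range M c rho d k)) hd)
      as Hge.
    simpl in Hge. rewrite hi1 in Hge.
    pose proof (Rdiv_nonneg eta1 M he1 HM). nra.
  - assert (inK : forall x, bin_lo M c k <= x <= bin_lo M c (k + 1) -> away_set R1 rho D x).
    { intros x hx. split. lra. intros d hd.
      destruct (Rle_or_lt rho (Rabs (x - d))) as [ok|bad]; auto. exfalso. apply nex. exists d. split; auto.
      apply Rabs_def2 in bad. unfold near_bin.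
      destruct (Rlt_dec (bin_lo M c k) (d + rho)); [|lra].
      destruct (Rlt_dec (d - rho) (bin_lo M c (k + 1))); [|lra]. auto. }
    assert (bin_defect p M c k <= eta1 / M).
    { apply (bin_defect_le_osc p M c p_density HM loc_int_xlnx_comp k B eps1 eta1); auto.
      intros x y hx hy. left. apply Hosc; auto.
      rewrite bin_lo_succ in hx, hy by auto. apply Rabs_def1; lra. }
    nra.
Qed.

Lemma zsum_bin_defect_le_near R1 D B rho eps1 eta1 del M c kL n :
  1 <= B -> 0 <= eta1 -> 0 < rho -> 0 < M -> / M < del ->
  (forall x, - R1 <= x <= R1 -> p x <= B) ->
  (forall s t, 0 <= s <= B -> 0 <= t <= B -> Rabs (s - t) <= eps1 -> Rabs (xlnx s - xlnx t) <= eta1) ->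
  (forall x y, away_set R1 rho D x -> away_set R1 rho D y -> Rabs (x - y) < del ->
     Rabs (p x - p y) < eps1) ->
  - R1 <= bin_lo M c kL -> bin_lo M c (kL + Z.of_nat n) <= R1 ->
  zsum (bin_defect p M c) kL n <=
  INR n * (eta1 / M) + 2 * (1 + B * ln B) / M * (INR (length D) * (2 * rho * M + 2)).
Proof.
  intros HB he1 hrho HM Hdel HBx Hxlnx Hosc h1 h2.
  set (C := 1 + B * ln B).
  assert (C0 : 0 <= 2 * C / M) by (apply Rdiv_nonneg; auto; unfold C; pose proof (ln_nonneg B HB); nra).
  eapply Rle_trans.
  - apply zsum_le with (U := fun k => eta1 / M + 2 * C / M * lsum D (fun d => near_bin M c rho d k)).
    intros i hi. destruct (bin_inside M c kL n i HM hi).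
    apply (bin_defect_le_near R1 D B rho eps1 eta1 del); auto; lra.
  - rewrite zsum_plus, zsum_const, zsum_scal, zsum_lsum.
    apply Rplus_le_compat_l, Rmult_le_compat_l; auto.
    rewrite <- lsum_const. apply lsum_le. intros d _. apply zsum_near_bin_le; auto.
Qed.

Lemma mid_defect_small R1 eta : 0 <= R1 -> 0 < eta ->
  exists m0 : nat, (1 <= m0)%nat /\ forall m c kL n, (m0 <= m)%nat ->
    - R1 <= bin_lo (INR m) c kL -> bin_lo (INR m) c (kL + Z.of_nat n) <= R1 ->
    zsum (bin_defect p (INR m) c) kL n <= eta.
Proof.
  intros hR he.
  destruct (pc_local_bound (- R1 - 1) (R1 + 1) ltac:(lra)) as [D [B [HB [HD HBx]]]].
  set (C := 1 + B * ln B).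
  assert (C1 : 1 <= C) by (unfold C; pose proof (ln_nonneg B HB); nra).
  set (eta1 := eta / (2 * (2 * R1 + 1))).
  assert (e1p : 0 < eta1) by (unfold eta1; apply Rdiv_lt_0_compat; lra).
  destruct (xlnx_clamp_unif_cont B HB eta1 e1p) as [del [delp Hdel]].
  assert (Hxlnx : forall s t, 0 <= s <= B -> 0 <= t <= B -> Rabs (s - t) <= del / 2 ->
    Rabs (xlnx s - xlnx t) <= eta1).
  { intros s t hs ht hst. rewrite <- (clamp_id B s hs), <- (clamp_id B t ht). apply Hdel. lra. }
  set (nD := INR (length D)). pose proof (pos_INR (length D)) as nD0. fold nD in nD0.
  set (rho := eta / (16 * C * (nD + 1))).
  assert (rp : 0 < rho) by (unfold rho; apply Rdiv_lt_0_compat; [lra|]; apply Rmult_lt_0_compat; lra).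
  destruct (unif_cont_away p R1 rho D rp HD (del / 2) ltac:(lra)) as [dl [dlp Hdl]].
  destruct (INR_unbounded (Rmax 1 (Rmax (2 / dl) (16 * C * (nD + 1) / eta)))) as [m0 Hm0].
  pose proof (Rmax_l 1 (Rmax (2 / dl) (16 * C * (nD + 1) / eta))).
  pose proof (Rmax_r 1 (Rmax (2 / dl) (16 * C * (nD + 1) / eta))).
  pose proof (Rmax_l (2 / dl) (16 * C * (nD + 1) / eta)). pose proof (Rmax_r (2 / dl) (16 * C * (nD + 1) / eta)).
  exists m0. split. { destruct m0. simpl in Hm0; lra. lia. }
  intros m c kL n hm h1 h2.
  set (M := INR m) in *. assert (HMm : INR m0 <= M) by (apply le_INR; auto).
  assert (HM : 0 < M) by lra.
  assert (invM : / M < dl).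
  { apply (Rmult_lt_reg_l M). lra. rewrite Rinv_r by lra.
    assert (hMd : 2 / dl * dl <= M * dl) by (apply Rmult_le_compat_r; lra).
    replace (2 / dl * dl) with 2 in hMd by (field; lra). lra. }
  eapply Rle_trans.
  { apply (zsum_bin_defect_le_near R1 D B rho (del / 2) eta1 dl); auto; try lra.
    intros; apply HBx; lra. }
  apply mid_defect_budget; fold C nD; try lra. rewrite bin_lo_add in h2 by auto. lra.
Qed.

End PiecewiseContinuous.

Definition ent_partial (p : R -> R) (M c : R) (N : nat) : R :=
  sum_f_R0 (fun n => ent_term (bin_prob p M c) (Z.of_nat n) + ent_term (bin_prob p M c) (- Z.of_nat n - 1)%Z) N.

Lemma H_quant_is_Un_cv p M c V : H_quant_is p M c V <-> Un_cv (ent_partial p M c) V.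
Proof. split; auto. Qed.

Lemma ent_partial_zsum p M c N : density p -> 0 < M ->
  ent_partial p M c N = zsum (bin_ent p M c) (- Z.of_nat (S N)) (2 * S N) +
    ln M * RInt p (bin_lo M c (- Z.of_nat (S N))) (bin_lo M c (- Z.of_nat (S N) + Z.of_nat (2 * S N))).
Proof.
  intros Dn HM. unfold ent_partial. rewrite sum_f_R0_zsum, <- zsum_ent_term by auto.
  apply zsum_ext. intro k. unfold ent_term. rewrite bin_prob_bin_mass. reflexivity.
Qed.

Lemma ent_partial_growing p M c : density p -> 0 < M -> Un_growing (ent_partial p M c).
Proof.
  intros Dn HM. apply sum_f_R0_pairs_growing. intro k.
  unfold ent_term at 1. rewrite bin_prob_bin_mass. apply (ent_term_bin_mass_ge0 p M c Dn HM).
Qed.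

Section Quantization.
Variables (p : R -> R) (L h Va H1 : R).
Hypotheses (p_density : density p)
  (p_pc : forall a b, a < b -> exists D : list R, forall x, a < x < b -> ~ In x D -> continuity_pt p x)
  (p_le_L : forall x, continuity_pt p x -> p x <= L)
  (p_H1 : H_quant_is p 1 0 H1)
  (p_xlnx_abs : Un_cv (sym_int (fun x => Rabs (xlnx (p x)))) Va)
  (h_tail : forall (N : nat) u v, u <= - INR N -> INR N <= v ->
     Rabs (RInt (fun x => xlnx (p x)) u v + h) <= Va - sym_int (fun x => Rabs (xlnx (p x))) N).

Let p_ge0 : forall x, 0 <= p x := proj1 p_density.
Let p_loc : loc_int p := proj1 (proj2 p_density).
Let p_cv : Un_cv (sym_int p) 1 := proj2 (proj2 p_density).
Let tail (N : nat) := Va - sym_int (fun x => Rabs (xlnx (p x))) N.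

Lemma tail_vanishes eps : 0 < eps -> exists Nd : nat, forall N, (Nd <= N)%nat -> tail N <= eps.
Proof.
  intros he. destruct (p_xlnx_abs eps he) as [Nd HNd]. exists Nd. intros N hN.
  specialize (HNd Nd (le_n _)). unfold Rdist in HNd. apply Rabs_def2 in HNd.
  pose proof (sym_int_mono (fun x => Rabs (xlnx (p x))) (fun x => Rabs_pos _)
    (fun a b hab => Rintegrable_abs _ _ _ (loc_int_xlnx_comp p L p_density p_pc p_le_L a b hab)) Nd N hN).
  unfold tail. lra.
Qed.

Lemma mass_tail_quarter : exists Nm : nat, forall u v, u <= v ->
  (INR Nm <= u \/ v <= - INR Nm) -> RInt p u v <= /4.
Proof.
  destruct (p_cv (/4) ltac:(lra)) as [Nm HNm]. exists Nm. intros u v huv H.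
  specialize (HNm Nm (le_n _)). unfold Rdist in HNm. apply Rabs_def2 in HNm.
  pose proof (RInt_tail_le p 1 p_ge0 p_loc p_cv Nm u v huv H). lra.
Qed.

Lemma unit_ent_tail eps : 0 < eps -> exists J : nat, forall A n,
  ((Z.of_nat J <= A)%Z \/ (A + Z.of_nat n <= - Z.of_nat J)%Z) -> zsum (unit_ent p) A n <= eps.
Proof.
  apply zsum_tail_small with H1.
  - intro j. unfold unit_ent.
    assert (unit_mass p j <= 1) by (apply RInt_le_lim; auto; lra).
    pose proof (xlnx_nonpos _ (conj (unit_mass_ge0 p p_density j) H)). lra.
  - replace (fun n => unit_ent p (Z.of_nat n) + unit_ent p (- Z.of_nat n - 1)%Z) with
      (fun n => ent_term (bin_prob p 1 0) (Z.of_nat n) + ent_term (bin_prob p 1 0) (- Z.of_nat n - 1)%Z).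
    + exact p_H1.
    + apply functional_extensionality. intro n. unfold ent_term, unit_ent, xlnx. rewrite !bin_prob_unit_mass. ring.
Qed.

(* The sum over bins [A .. A+n) covering [[-N-1, N+1]] splits into a left tail, a middle part
   near [[-N, N]] where the Jensen defect is controlled, and a right tail. *)
Lemma zsum_bin_ent_upper (m : nat) c epsQ Kmid (N J : nat) A n : (1 <= m)%nat -> (J + 1 <= N)%nat ->
  (forall A' n', ((Z.of_nat J <= A')%Z \/ (A' + Z.of_nat n' <= - Z.of_nat J)%Z) ->
     zsum (unit_ent p) A' n' <= epsQ) ->
  (forall u v, u <= v -> (INR N - 1 <= u \/ v <= - (INR N - 1)) -> RInt p u v <= /4) ->
  (forall kL n', - (INR N + 1) <= bin_lo (INR m) c kL -> bin_lo (INR m) c (kL + Z.of_nat n') <= INR N + 1 ->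
     zsum (bin_defect p (INR m) c) kL n' <= Kmid) ->
  bin_lo (INR m) c A <= - INR N - 1 -> INR N + 1 <= bin_lo (INR m) c (A + Z.of_nat n) ->
  zsum (bin_ent p (INR m) c) A n <= 4 * epsQ + Kmid + h + tail N.
Proof.
  intros hm hNJ HJ Hmass Hmid hA hB.
  assert (HM : 0 < INR m) by (apply lt_0_INR; lia).
  assert (iM : / INR m <= 1).
  { rewrite <- Rinv_1. apply Rinv_le_contravar. lra. apply (le_INR 1) in hm. simpl in hm. lra. }
  destruct (bin_range_split (INR m) c A n (INR N) HM iM (pos_INR N) hA hB) as [nL [nM [nR [En [hL hR]]]]].
  rewrite En, zsum_add, zsum_add.
  assert (zsum (bin_ent p (INR m) c) A nL <= 2 * epsQ).
  { apply (zsum_bin_ent_left_le p m c p_density hm A nL N J epsQ hNJ).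
    - intros u v huv hv. apply Hmass; [lra|right; lra].
    - intros A' n' HA'. apply HJ; auto.
    - lra. }
  assert (zsum (bin_ent p (INR m) c) (A + Z.of_nat nL + Z.of_nat nM) nR <= 2 * epsQ).
  { apply (zsum_bin_ent_right_le p m c p_density hm _ nR N J epsQ ltac:(lia)).
    - intros u v huv hu. apply Hmass; [lra|left; lra].
    - intros A' n' HA'. apply HJ; auto.
    - lra. }
  assert (zsum (bin_ent p (INR m) c) (A + Z.of_nat nL) nM <= Kmid + h + tail N).
  { assert (Hdef : zsum (bin_defect p (INR m) c) (A + Z.of_nat nL) nM <= Kmid) by (apply Hmid; lra).
    unfold bin_defect in Hdef. rewrite zsum_plus in Hdef. unfold bin_xlnx in Hdef.
    rewrite zsum_RInt_bins in Hdef by (auto; apply (loc_int_xlnx_comp p L); auto).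
    pose proof (Rabs_le_inv _ _ (h_tail N _ _ (proj2 hL) (proj1 hR))).
    unfold tail. lra. }
  lra.
Qed.

Lemma ent_partial_upper epsQ : 0 < epsQ -> exists N0 : nat, forall (N m : nat) c Kmid,
  (N0 <= N)%nat -> (1 <= m)%nat ->
  (forall kL n, - (INR N + 1) <= bin_lo (INR m) c kL -> bin_lo (INR m) c (kL + Z.of_nat n) <= INR N + 1 ->
     zsum (bin_defect p (INR m) c) kL n <= Kmid) ->
  exists N1, forall Np, (N1 <= Np)%nat ->
    ent_partial p (INR m) c Np <= ln (INR m) + 4 * epsQ + Kmid + h + tail N.
Proof.
  intros he. destruct (unit_ent_tail epsQ he) as [J HJ]. destruct mass_tail_quarter as [Nm HNm].
  exists (J + 1 + Nm + 1)%nat. intros N m c Kmid hN hm Hmid.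
  assert (HM : 0 < INR m) by (apply lt_0_INR; lia).
  assert (lnM : 0 <= ln (INR m)) by (apply ln_nonneg; apply (le_INR 1) in hm; simpl in hm; lra).
  destruct (bin_range_covers (INR m) c (INR N + 1) HM) as [N1 HN1].
  exists N1. intros Np hNp. destruct (HN1 Np hNp) as [r1 r2].
  rewrite ent_partial_zsum by auto.
  assert (zsum (bin_ent p (INR m) c) (- Z.of_nat (S Np)) (2 * S Np) <= 4 * epsQ + Kmid + h + tail N).
  { apply (zsum_bin_ent_upper m c epsQ Kmid N J); auto; try lia; try lra.
    intros u v huv hu. apply HNm; auto.
    apply le_INR in hN. rewrite !plus_INR in hN. simpl in hN. pose proof (pos_INR J).
    destruct hu; [left|right]; lra. }
  assert (RInt p (bin_lo (INR m) c (- Z.of_nat (S Np))) (bin_lo (INR m) c (- Z.of_nat (S Np) + Z.of_nat (2 * S Np))) <= 1)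
    by (apply RInt_le_lim; auto; apply bin_lo_mono; auto).
  pose proof (Rmult_le_compat_l _ _ _ lnM H0). lra.
Qed.

Lemma ent_partial_lower (m : nat) c (N : nat) : (1 <= m)%nat -> exists N1, forall Np, (N1 <= Np)%nat ->
  h - tail N + ln (INR m) * sym_int p N <= ent_partial p (INR m) c Np.
Proof.
  intros hm. assert (HM : 0 < INR m) by (apply lt_0_INR; lia).
  assert (lnM : 0 <= ln (INR m)) by (apply ln_nonneg; apply (le_INR 1) in hm; simpl in hm; lra).
  destruct (bin_range_covers (INR m) c (INR N) HM) as [N1 HN1].
  exists N1. intros Np hNp. destruct (HN1 Np hNp) as [r1 r2].
  rewrite ent_partial_zsum by auto.
  pose proof (zsum_bin_ent_ge p (INR m) c p_density HM (loc_int_xlnx_comp p L p_density p_pc p_le_L)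
    (- Z.of_nat (S Np)) (2 * S Np)).
  pose proof (Rabs_le_inv _ _ (h_tail N _ _ r1 r2)).
  assert (sym_int p N <= RInt p (bin_lo (INR m) c (- Z.of_nat (S Np)))
                                (bin_lo (INR m) c (- Z.of_nat (S Np) + Z.of_nat (2 * S Np)))).
  { unfold sym_int. apply RInt_le_sub_interval; auto. pose proof (pos_INR N). lra. }
  pose proof (Rmult_le_compat_l _ _ _ lnM H2). unfold tail. lra.
Qed.

Lemma quant_entropy_exists m c : (1 <= m)%nat -> exists V, H_quant_is p (INR m) c V.
Proof.
  intros hm. assert (HM : 0 < INR m) by (apply lt_0_INR; lia).
  destruct (ent_partial_upper 1 Rlt_0_1) as [N0 HN0].
  destruct (mid_defect_bounded p L p_density p_pc p_le_L (INR N0 + 1)) as [K HK].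
  { pose proof (pos_INR N0). lra. }
  destruct (HN0 N0 m c K (le_n _) hm (fun kL n => HK m c kL n hm)) as [N1 HN1].
  assert (ub : has_ub (ent_partial p (INR m) c)).
  { exists (ln (INR m) + 4 * 1 + K + h + tail N0). intros x [i ->].
    apply Rle_trans with (ent_partial p (INR m) c (max i N1)).
    - apply tech9. apply ent_partial_growing; auto. lia.
    - apply HN1. lia. }
  destruct (growing_cv _ (ent_partial_growing p (INR m) c p_density HM) ub) as [V HV].
  exists V. apply H_quant_is_Un_cv. exact HV.
Qed.

Lemma quant_entropy_upper eps : 0 < eps -> exists m0 : nat, forall m c V, (m0 <= m)%nat ->
  H_quant_is p (INR m) c V -> V <= ln (INR m) + h + eps.
Proof.
  intros he.
  destruct (ent_partial_upper (eps / 16) ltac:(lra)) as [N0 HN0].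
  destruct (tail_vanishes (eps / 4) ltac:(lra)) as [Nd HNd].
  set (N := (N0 + Nd)%nat).
  destruct (mid_defect_small p L p_density p_pc p_le_L (INR N + 1) (eps / 4)) as [m0 [hm0 Hm0]];
    [pose proof (pos_INR N); lra | lra |].
  exists m0. intros m c V hm HV.
  destruct (HN0 N m c (eps / 4) ltac:(unfold N; lia) ltac:(lia) (fun kL n => Hm0 m c kL n hm)) as [N1 HN1].
  pose proof (HNd N ltac:(unfold N; lia)).
  apply (Un_cv_le_eventually _ _ _ N1 (proj1 (H_quant_is_Un_cv _ _ _ _) HV)).
  intros Np hNp. specialize (HN1 Np hNp). lra.
Qed.

Lemma quant_entropy_lower eps m c V : 0 < eps -> (1 <= m)%nat ->
  H_quant_is p (INR m) c V -> ln (INR m) + h - eps <= V.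
Proof.
  intros he hm HV.
  assert (lnM : 0 <= ln (INR m)) by (apply ln_nonneg; apply (le_INR 1) in hm; simpl in hm; lra).
  set (e2 := eps / (2 * (ln (INR m) + 1))).
  assert (e2p : 0 < e2) by (unfold e2; apply Rdiv_lt_0_compat; lra).
  assert (e2M : ln (INR m) * e2 <= eps / 2).
  { apply Rle_trans with ((ln (INR m) + 1) * e2). nra. right. unfold e2. field. lra. }
  destruct (p_cv e2 e2p) as [Ng HNg]. destruct (tail_vanishes (eps / 2) ltac:(lra)) as [Nd HNd].
  set (N := (Ng + Nd)%nat).
  assert (1 - e2 <= sym_int p N).
  { specialize (HNg N ltac:(unfold N; lia)). unfold Rdist in HNg. apply Rabs_def2 in HNg. lra. }
  pose proof (HNd N ltac:(unfold N; lia)).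
  destruct (ent_partial_lower m c N hm) as [N1 HN1].
  apply (Un_cv_ge_eventually _ _ _ N1 (proj1 (H_quant_is_Un_cv _ _ _ _) HV)).
  intros Np hNp. specialize (HN1 Np hNp).
  pose proof (Rmult_le_compat_l _ _ _ lnM H). lra.
Qed.

Lemma quant_entropy_cv (c : nat -> R) : exists Hs : nat -> R,
  (forall m : nat, (1 <= m)%nat -> H_quant_is p (INR m) (c m) (Hs m)) /\
  Un_cv (fun m => Hs m - ln (INR m)) h.
Proof.
  set (Hs := fun m => epsilon (inhabits 0) (fun V => H_quant_is p (INR m) (c m) V)).
  assert (HsP : forall m, (1 <= m)%nat -> H_quant_is p (INR m) (c m) (Hs m)).
  { intros m hm. apply epsilon_spec, quant_entropy_exists; auto. }
  exists Hs. split; auto.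
  intros eps he. destruct (quant_entropy_upper (eps / 2) ltac:(lra)) as [m0 Hm0].
  exists (S m0). intros m hm. unfold Rdist.
  pose proof (Hm0 m (c m) (Hs m) ltac:(lia) (HsP m ltac:(lia))).
  pose proof (quant_entropy_lower (eps / 2) m (c m) (Hs m) ltac:(lra) ltac:(lia) (HsP m ltac:(lia))).
  apply Rabs_def1; lra.
Qed.

End Quantization.

Theorem mainTheorem14 (p : R -> R) (c : nat -> R) :
  is_density p ->
  piecewise_continuous p ->
  (exists H1, H_quant_is p 1 0 H1) ->
  integrable_R (fun x => p x * Rabs (ln (p x))) ->
  ess_bounded p ->
  exists (h : R) (Hs : nat -> R),
    diff_entropy_is p h /\
    (forall m : nat, (1 <= m)%nat -> H_quant_is p (INR m) (c m) (Hs m)) /\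
    Un_cv (fun m => Hs m - ln (INR m)) h.
Proof.
  intros [p_ge0 [p_li p_cv]] [p_pc _] [H1 p_H1] [Va [_ p_abs_cv]] [L p_le_L].
  assert (p_density : density p) by (split; [|split]; auto; apply loc_int_locally_integrable; auto).
  pose proof (loc_int_xlnx_comp p L p_density p_pc p_le_L) as xlnx_p_loc.
  assert (p_xlnx_abs : Un_cv (sym_int (fun x => Rabs (xlnx (p x)))) Va).
  { replace (fun x => Rabs (xlnx (p x))) with (fun x => p x * Rabs (ln (p x))); auto.
    apply functional_extensionality. intro x. unfold xlnx. rewrite Rabs_mult, (Rabs_pos_eq (p x)); auto. }
  destruct (abs_improper_integral _ Va xlnx_p_loc p_xlnx_abs) as [I [HI HItail]].
  destruct (quant_entropy_cv p L (- I) Va H1 p_density p_pc p_le_L p_H1 p_xlnx_abs) with c as [Hs [HsP HsC]].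
  { intros N u v hu hv. rewrite <- (Rminus_def _ I). auto. }
  exists (- I), Hs. repeat split; auto.
  - apply loc_int_locally_integrable; auto.
  - rewrite Ropp_involutive. auto.
Qed.
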